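(* Let $d\ge5$ and let $q_1,\ldots,q_d$ be real numbers with $|q_i|\ge e^e$, of which $r\ge1$ are positive and $s\ge1$ negative, $r+s=d$. With $P$, $q_0$, $q$, $|Q|$, $S_j$ as defined below, $$\int_{(8dP)^{-1}q^{-1/2}}^{(8dP)^{-1}q_0^{-1/2}} |S_1(\alpha)\cdots S_d(\alpha)|\,\mathrm{d}\alpha \le C\, q^{1/2}|Q|^{-1/2} P^{d-3}\log P,$$ where $C$ depends only on $d$.
   Context: Notation: $e(x)=\exp(2\pi i x)$; $q_0 = \min_j|q_j|$, $q = \max_j|q_j|$, $|Q| = \prod_{j=1}^d|q_j|$; $S_j(\alpha) = \sum_{m\in\mathbb{Z},\ P < |q_j|^{1/2} m < 2dP} e(\alpha q_j m^2)$. The parameter $P$ is $P = \exp\{(1 + \tfrac{10 d^2}{\log\log H})\log H\}$ with $H = C_d\, q^{\frac12+\beta}$, $C_d\ge1$ a constant depending on $d$, and $\beta$ given, with $r'=\max(r,s)$, $s'=\min(r,s)$, by $\beta = \frac{r'}{2s'}$ if $r'\ge s'+3$, $\beta=\frac{s'+2}{2(s'-1)}$ if $r'\in\{s'+1,s'+2\}$, $\beta = \frac{s'+1}{2(s'-2)}$ if $r'=s'$. *)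

From Stdlib Require Import Reals Lra Lia List.
From Coquelicot Require Import Coquelicot.
Open Scope R_scope.

(* e(x) = exp(2 pi i x), written as the complex number (cos 2pi x, sin 2pi x). *)
Definition ee (x : R) : C := (cos (2 * PI * x), sin (2 * PI * x)).

(* The coefficients q_1..q_d are represented as q 0, ..., q (d-1). *)
Definition absq (d : nat) (q : nat -> R) : list R := map (fun i => Rabs (q i)) (seq 0 d).

Definition qmax (d : nat) (q : nat -> R) : R := fold_right Rmax 0 (absq d q).
(* q_0 = min_j |q_j| *)
Definition qmin (d : nat) (q : nat -> R) : R := fold_right Rmin (Rabs (q 0%nat)) (absq d q).
Definition Qabs (d : nat) (q : nat -> R) : R := fold_right Rmult 1 (absq d q).

Definition npos (d : nat) (q : nat -> R) : nat :=
  length (filter (fun i => if Rlt_dec 0 (q i) then true else false) (seq 0 d)).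
Definition nneg (d : nat) (q : nat -> R) : nat :=
  length (filter (fun i => if Rlt_dec (q i) 0 then true else false) (seq 0 d)).

Definition beta (r s : nat) : R :=
  let r' := Nat.max r s in
  let s' := Nat.min r s in
  if Nat.leb (s' + 3) r' then INR r' / (2 * INR s')
  else if Nat.leb (s' + 1) r' then (INR s' + 2) / (2 * (INR s' - 1))
  else (INR s' + 1) / (2 * (INR s' - 2)).

Definition Hpar (d : nat) (Cd : R) (q : nat -> R) : R :=
  Cd * Rpower (qmax d q) (/2 + beta (npos d q) (nneg d q)).

Definition Ppar (d : nat) (Cd : R) (q : nat -> R) : R :=
  let H := Hpar d Cd q in
  exp ((1 + 10 * INR d ^ 2 / ln (ln H)) * ln H).

(* S_j(alpha) = sum over integers m with P < |q_j|^(1/2) m < 2dP of e(alpha q_j m^2).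
   Since P > 0, such m are positive and satisfy m < 2dP, so the sum is taken over
   m = 0 .. floor-ish(2dP) with an indicator of the defining condition. *)
Definition Sj (d : nat) (Cd : R) (q : nat -> R) (j : nat) (alpha : R) : C :=
  let P := Ppar d Cd q in
  sum_n (fun m : nat =>
           if Rlt_dec P (sqrt (Rabs (q j)) * INR m) then
             if Rlt_dec (sqrt (Rabs (q j)) * INR m) (2 * INR d * P) then
               ee (alpha * q j * INR m ^ 2)
             else zero
           else zero)
        (Z.to_nat (up (2 * INR d * P))).

Definition absprodS (d : nat) (Cd : R) (q : nat -> R) (alpha : R) : R :=
  fold_right Rmult 1 (map (fun j => Cmod (Sj d Cd q j alpha)) (seq 0 d)).

From Stdlib Require Import Reals List Lia Lra ZArith Psatz.
From Coquelicot Require Import Coquelicot.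
Open Scope R_scope.

(* Write t_j = |q_j|^(1/2) |S_j|. On the range of integration, Weyl differencing bounds
   every t_j pointwise by V, with V^2 = O(d P q log P), while expanding |S_j|^2 and
   integrating term by term bounds the integral of t_j^2 by
   O(|q_j|^(1/2) q_0^(-1/2) + d log P). Bound all factors of t_1 ... t_d but two by V,
   take one of the remaining two with |q_a| = q_0, and split the product of these two by
   AM-GM with weight q^(1/4): the integral of |S_1 ... S_d| is
   O(V^(d-2) q^(1/4) d log P |Q|^(-1/2)). As P >= q^(1/2 + beta) and
   (d - 4)(1/2 + beta) >= d - 5/2, the power P^(d-4) dominates q^(d-5/2) (log P)^(d-2), which
   is what is needed to bound V^(d-2) q^(1/4) by a constant times q^(1/2) P^(d-3). *)

(** * Finite sums *)

Lemma sum_f_R0_swap (F : nat -> nat -> R) (N M : nat) :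
  sum_f_R0 (fun i => sum_f_R0 (fun j => F i j) N) M =
  sum_f_R0 (fun j => sum_f_R0 (fun i => F i j) M) N.
Proof.
  induction M as [|M IH]; simpl; [reflexivity|].
  rewrite IH, <- sum_plus. reflexivity.
Qed.

Lemma sum_f_R0_mul (a b : nat -> R) (M N : nat) :
  sum_f_R0 a M * sum_f_R0 b N =
  sum_f_R0 (fun i => sum_f_R0 (fun j => a i * b j) N) M.
Proof.
  induction M as [|M IH]; simpl.
  - rewrite scal_sum. apply sum_eq; intros; ring.
  - rewrite <- IH, Rmult_plus_distr_r. f_equal.
    rewrite scal_sum. apply sum_eq; intros; ring.
Qed.

Lemma sum_f_R0_eq0 (f : nat -> R) (N : nat) :
  (forall i, (i <= N)%nat -> f i = 0) -> sum_f_R0 f N = 0.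
Proof.
  induction N as [|N IH]; simpl; intros H; [apply H; lia|].
  rewrite IH, H; [ring|lia|intros; apply H; lia].
Qed.

Lemma sum_f_R0_term_le (f : nat -> R) (N k : nat) :
  (forall i, 0 <= f i) -> (k <= N)%nat -> f k <= sum_f_R0 f N.
Proof.
  intros Hf Hk. induction N as [|N IH]; simpl.
  - replace k with 0%nat by lia. lra.
  - destruct (Nat.eq_dec k (S N)) as [->|Hne].
    + pose proof (cond_pos_sum f N Hf). lra.
    + specialize (IH ltac:(lia)). pose proof (Hf (S N)). lra.
Qed.

Lemma sum_f_R0_zero_tail (f : nat -> R) (A B : nat) :
  (A <= B)%nat -> (forall i, (A < i)%nat -> f i = 0) ->
  sum_f_R0 f B = sum_f_R0 f A.
Proof.
  intros HAB Hz. induction B as [|B IH].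
  - replace A with 0%nat by lia. reflexivity.
  - destruct (Nat.eq_dec A (S B)) as [->|Hne]; [reflexivity|].
    simpl. rewrite IH, Hz by lia. ring.
Qed.

Lemma sum_f_R0_delta (g : nat -> R) (m M : nat) : (m <= M)%nat ->
  sum_f_R0 (fun n => if (m =? n)%nat then g n else 0) M = g m.
Proof.
  intros Hm. induction M as [|M IH].
  - replace m with 0%nat by lia. reflexivity.
  - rewrite tech5. destruct (Nat.eq_dec m (S M)) as [->|Hne].
    + rewrite Nat.eqb_refl, sum_f_R0_eq0; [ring|].
      intros i Hi. rewrite (proj2 (Nat.eqb_neq _ _)) by lia. reflexivity.
    + rewrite IH, (proj2 (Nat.eqb_neq _ _)) by lia. ring.
Qed.

Lemma sum_f_R0_square_sym (F : nat -> nat -> R) (M : nat) :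
  (forall m n, F m n = F n m) ->
  sum_f_R0 (fun m => sum_f_R0 (fun n => F m n) M) M =
  sum_f_R0 (fun n => F n n) M +
  2 * sum_f_R0 (fun n => sum_f_R0 (fun m => if (n <? m)%nat then F m n else 0) M) M.
Proof.
  intros Hs.
  transitivity (sum_f_R0 (fun m => sum_f_R0 (fun n =>
     (if (m =? n)%nat then F m n else 0) + (if (n <? m)%nat then F m n else 0)
      + (if (m <? n)%nat then F n m else 0)) M) M).
  { apply sum_eq; intros m _; apply sum_eq; intros n _.
    destruct (Nat.lt_total m n) as [H|[->|H]].
    - rewrite (proj2 (Nat.eqb_neq m n)), (proj2 (Nat.ltb_ge n m)),
        (proj2 (Nat.ltb_lt m n)), Hs by lia. ring.
    - rewrite Nat.eqb_refl, Nat.ltb_irrefl. ring.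
    - rewrite (proj2 (Nat.eqb_neq m n)), (proj2 (Nat.ltb_lt n m)),
        (proj2 (Nat.ltb_ge m n)) by lia. ring. }
  rewrite (sum_eq _ (fun m => F m m + sum_f_R0 (fun n => if (n <? m)%nat then F m n else 0) M
                              + sum_f_R0 (fun n => if (m <? n)%nat then F n m else 0) M)).
  2:{ intros m Hm. rewrite <- (sum_f_R0_delta (fun n => F m n) m M Hm), <- !sum_plus.
      reflexivity. }
  rewrite !sum_plus, (sum_f_R0_swap (fun m n => if (n <? m)%nat then F m n else 0)).
  ring.
Qed.

Lemma sum_f_R0_shift (g : nat -> R) (n M : nat) :
  (forall k, (M < k)%nat -> g k = 0) ->
  sum_f_R0 (fun m => if (n <? m)%nat then g m else 0) M =
  sum_f_R0 (fun h => if (1 <=? h)%nat then g (n + h)%nat else 0) M.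
Proof.
  intros Hz.
  assert (Hgen : forall K, sum_f_R0 (fun h => if (1 <=? h)%nat then g (n + h)%nat else 0) K =
                  sum_f_R0 (fun m => if (n <? m)%nat then g m else 0) (n + K)).
  { induction K as [|K IH].
    - simpl. rewrite Nat.add_0_r. symmetry. apply sum_f_R0_eq0. intros i Hi.
      rewrite (proj2 (Nat.ltb_ge n i)) by lia. reflexivity.
    - rewrite tech5, IH, Nat.add_succ_r, tech5, (proj2 (Nat.ltb_lt n _)) by lia.
      reflexivity. }
  rewrite Hgen. symmetry. apply sum_f_R0_zero_tail; [lia|]. intros i Hi.
  destruct (n <? i)%nat; [apply Hz; lia|reflexivity].
Qed.

Lemma sum_f_R0_telescope_block (c : nat -> bool) (G : nat -> R) (M : nat) :
  (forall m n k, (m <= k <= n)%nat -> c m = true -> c n = true -> c k = true) ->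
  exists u v, sum_f_R0 (fun n => if c n then G (S n) - G n else 0) M = G u - G v.
Proof.
  intros Hconv.
  assert (Hgen : forall K, exists u v,
    sum_f_R0 (fun n => if c n then G (S n) - G n else 0) K = G u - G v /\
    (c K = true -> u = S K)).
  { induction K as [|K IH]; simpl.
    - destruct (c 0%nat).
      + exists 1%nat, 0%nat. auto.
      + exists 0%nat, 0%nat. split; [ring|discriminate].
    - destruct IH as [u [v [Heq Hu]]].
      destruct (c (S K)) eqn:E1; [destruct (c K) eqn:E0|].
      + exists (S (S K)), v. rewrite Heq, (Hu eq_refl). split; [ring|auto].
      + exists (S (S K)), (S K).
        rewrite sum_f_R0_eq0; [split; [ring|auto]|].
        intros i Hi. destruct (c i) eqn:Ei; [|reflexivity].
        rewrite (Hconv i (S K) K) in E0 by (auto; lia). discriminate.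
      + exists u, v. rewrite Heq. split; [ring|discriminate]. }
  destruct (Hgen M) as [u [v [H _]]]. eauto.
Qed.

Lemma sum_f_R0_le_support_length (f : nat -> R) (x1 x2 : R) (M : nat) :
  (forall n, 0 <= f n <= 1) ->
  (forall n, f n <> 0 -> x1 <= INR n <= x2) ->
  sum_f_R0 f M <= Rmax 0 (Rmin (INR M) x2 - x1 + 1).
Proof.
  intros H01 Hsupp. induction M as [|M IH]; [simpl|rewrite tech5].
  - destruct (Req_dec (f 0%nat) 0) as [E|E].
    + rewrite E. apply Rmax_l.
    + destruct (Hsupp _ E) as [h1 h2]. simpl in *.
      rewrite Rmin_left by lra. specialize (H01 0%nat).
      eapply Rle_trans; [|apply Rmax_r]. lra.
  - rewrite S_INR. destruct (Req_dec (f (S M)) 0) as [E|E].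
    + rewrite E, Rplus_0_r. eapply Rle_trans; [apply IH|].
      apply Rle_max_compat_l.
      unfold Rmin. destruct (Rle_dec (INR M) x2), (Rle_dec (INR M + 1) x2); lra.
    + destruct (Hsupp _ E) as [h1 h2]. rewrite S_INR in *.
      rewrite (Rmin_left (INR M)) in IH by lra. rewrite (Rmin_left (INR M + 1)) by lra.
      rewrite Rmax_right in IH by lra. rewrite Rmax_right by lra.
      specialize (H01 (S M)). lra.
Qed.

Lemma sum_f_R0_indicator_ge (v : R) (K : nat) :
  Rmin (INR K) (v - 1) <=
  sum_f_R0 (fun j => if Rle_dec 1 (INR j) then if Rle_dec (INR j) v then 1 else 0 else 0) K.
Proof.
  induction K as [|K IH]; [simpl|rewrite tech5].
  - destruct (Rle_dec 1 0); [lra|]. unfold Rmin. destruct (Rle_dec 0 (v-1)); lra.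
  - rewrite S_INR in *.
    destruct (Rle_dec 1 (INR K + 1)) as [h|h]; [|pose proof (pos_INR K); lra].
    unfold Rmin in *.
    destruct (Rle_dec (INR K + 1) v), (Rle_dec (INR K) (v-1)), (Rle_dec (INR K + 1) (v-1)); lra.
Qed.

Lemma sum_f_R0_ones (N : nat) : sum_f_R0 (fun j => if (1 <=? j)%nat then 1 else 0) N = INR N.
Proof.
  induction N as [|N IH]; [reflexivity|].
  rewrite tech5, IH, S_INR, (proj2 (Nat.leb_le 1 (S N))) by lia. ring.
Qed.

Lemma sum_f_R0_if (b : bool) (f : nat -> R) (N : nat) :
  sum_f_R0 (fun i => if b then f i else 0) N = if b then sum_f_R0 f N else 0.
Proof. destruct b; [reflexivity|apply sum_f_R0_eq0; auto]. Qed.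

(** * Elementary estimates *)

Lemma PI_ge_3 : 3 <= PI.
Proof. pose proof PI2_3_2. lra. Qed.

Lemma sin_ge_third (a : R) : 0 <= a <= 2 -> a / 3 <= sin a.
Proof.
  intros Ha. pose proof PI_ge_3.
  destruct (SIN a) as [HS _]; [lra|lra|].
  eapply Rle_trans; [|exact HS].
  unfold sin_lb, sin_approx, sin_term. simpl.
  set (t := a * a).
  assert (0 <= t <= 4) by (unfold t; nra).
  assert (1/3 <= 1 - t / 6 + t * t / 120 - t * t * t / 5040) by nra.
  apply Rle_trans with (a * (1 - t / 6 + t * t / 120 - t * t * t / 5040)); [nra|].
  unfold t. right. field.
Qed.

Lemma Rabs_le_Rabs_sin_PI (u : R) : Rabs u <= 1/2 -> Rabs u <= Rabs (sin (PI * u)).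
Proof.
  intros Hu. pose proof PI_ge_3. pose proof PI_4.
  destruct (Rle_dec 0 u) as [Hp|Hn].
  - rewrite (Rabs_right u) in * by lra.
    assert (PI * u / 3 <= sin (PI * u)) by (apply sin_ge_third; nra).
    rewrite Rabs_right by nra. nra.
  - rewrite (Rabs_left u) in * by lra.
    assert (PI * (-u) / 3 <= sin (PI * (-u))) by (apply sin_ge_third; nra).
    replace (PI * (-u)) with (- (PI * u)) in * by ring.
    rewrite sin_neg in *. rewrite Rabs_left1 by nra. nra.
Qed.

Lemma Rabs_sin_sub_INR_PI (x : R) (k : nat) : Rabs (sin (x - INR k * PI)) = Rabs (sin x).
Proof.
  induction k as [|k IH]; [simpl; f_equal; f_equal; ring|].
  rewrite S_INR, <- IH.
  replace (x - INR k * PI) with ((x - (INR k + 1) * PI) + PI) by ring.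
  rewrite neg_sin, Rabs_Ropp. reflexivity.
Qed.

Lemma INR_up_bounds (x : R) : 0 <= x -> x < INR (Z.to_nat (up x)) <= x + 1.
Proof.
  intros Hx. destruct (archimed x) as [H1 H2].
  assert (Hz : (0 <= up x)%Z) by (assert (-1 < up x)%Z by (apply lt_IZR; simpl; lra); lia).
  rewrite INR_IZR_INZ, Z2Nat.id by exact Hz. lra.
Qed.

Lemma dist_nat_le_Rabs_sin_PI (x : R) : 0 <= x ->
  exists k : nat, INR k <= x + 1/2 /\ Rabs (x - INR k) <= Rabs (sin (PI * x)).
Proof.
  intros Hx. destruct (archimed (x - 1/2)) as [H1 H2].
  assert (Hz : (0 <= up (x - 1/2))%Z).
  { assert (-1 < up (x - 1/2))%Z by (apply lt_IZR; simpl; lra). lia. }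
  set (k := Z.to_nat (up (x - 1/2))).
  assert (Hk : INR k = IZR (up (x - 1/2))) by (unfold k; rewrite INR_IZR_INZ, Z2Nat.id; auto).
  exists k. split; [lra|].
  rewrite <- (Rabs_sin_sub_INR_PI (PI * x) k).
  replace (PI * x - INR k * PI) with (PI * (x - INR k)) by ring.
  apply Rabs_le_Rabs_sin_PI. apply Rabs_le. lra.
Qed.

Lemma ln_le_2_sqrt (y : R) : 0 < y -> ln y <= 2 * sqrt y.
Proof.
  intros Hy. pose proof (sqrt_lt_R0 y Hy) as Hs.
  assert (ln (sqrt y) <= sqrt y - 1).
  { pose proof (exp_ineq1_le (ln (sqrt y))). rewrite exp_ln in H by lra. lra. }
  assert (ln y = 2 * ln (sqrt y)).
  { rewrite <- (sqrt_sqrt y) at 1 by lra. rewrite ln_mult by lra. ring. }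
  lra.
Qed.

Lemma inv_le_ln_sub_ln_pred (x : R) : 2 <= x -> / x <= ln x - ln (x - 1).
Proof.
  intros Hx. pose proof (exp_ineq1_le (- / x)) as H.
  assert (Hx1 : 0 < 1 - / x) by (assert (/ x <= / 2) by (apply Rinv_le_contravar; lra); lra).
  assert (ln (1 - / x) <= - / x).
  { rewrite <- (ln_exp (- / x)). apply ln_le; lra. }
  replace (1 - / x) with ((x - 1) / x) in * by (field; lra).
  unfold Rdiv in *. rewrite ln_mult, ln_Rinv in * by (try apply Rinv_0_lt_compat; lra). lra.
Qed.

Lemma harmonic_le_1_ln (N : nat) : (1 <= N)%nat ->
  sum_f_R0 (fun j => if (1 <=? j)%nat then / INR j else 0) N <= 1 + ln (INR N).
Proof.
  intros HN. induction N as [|N IH]; [lia|].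
  destruct (Nat.eq_dec N 0) as [->|HN0]; [simpl; rewrite ln_1; lra|].
  rewrite tech5, (proj2 (Nat.leb_le 1 (S N))), S_INR by lia.
  specialize (IH ltac:(lia)).
  assert (HN1 : 1 <= INR N) by (apply (le_INR 1); lia).
  pose proof (inv_le_ln_sub_ln_pred (INR N + 1) ltac:(lra)) as Hln.
  replace (INR N + 1 - 1) with (INR N) in Hln by ring. lra.
Qed.

Lemma harmonic_shift_le (m M : nat) :
  sum_f_R0 (fun n => if (m <? n)%nat then / (INR n - INR m) else 0) M
  <= 1 + ln (INR M + 1).
Proof.
  assert (Hg : forall K, sum_f_R0 (fun n => if (m <? n)%nat then / (INR n - INR m) else 0) K
     <= if (m <? K)%nat then 1 + ln (INR K - INR m) else 0).
  { induction K as [|K IH].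
    - simpl. lra.
    - rewrite tech5. destruct (m <? S K)%nat eqn:E1.
      + apply Nat.ltb_lt in E1. rewrite S_INR. destruct (m <? K)%nat eqn:E0.
        * apply Nat.ltb_lt in E0.
          assert (INR m + 1 <= INR K) by (rewrite <- S_INR; apply le_INR; lia).
          pose proof (inv_le_ln_sub_ln_pred (INR K + 1 - INR m) ltac:(lra)) as Hln.
          replace (INR K + 1 - INR m - 1) with (INR K - INR m) in Hln by ring. lra.
        * apply Nat.ltb_ge in E0. assert (K = m) by lia; subst K.
          replace (INR m + 1 - INR m) with 1 by ring. rewrite ln_1, Rinv_1. lra.
      + apply Nat.ltb_ge in E1. rewrite (proj2 (Nat.ltb_ge m K)) in IH by lia. lra. }
  eapply Rle_trans; [apply Hg|]. pose proof (pos_INR m).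
  assert (0 <= ln (INR M + 1)) by (rewrite <- ln_1; apply ln_le; [lra|pose proof (pos_INR M); lra]).
  destruct (m <? M)%nat eqn:E; [|lra].
  apply Nat.ltb_lt, lt_INR in E.
  assert (ln (INR M - INR m) <= ln (INR M + 1)) by (apply ln_le; lra). lra.
Qed.

Lemma sqrt_le_self (x : R) : 1 <= x -> sqrt x <= x.
Proof.
  intros Hx. rewrite <- (sqrt_sqrt x) at 2 by lra.
  assert (1 <= sqrt x) by (rewrite <- sqrt_1; apply sqrt_le_1; lra). nra.
Qed.

Lemma mul_le_amgm (x y r : R) : 0 < r -> x * y <= (r * x ^ 2 + y ^ 2 / r) / 2.
Proof.
  intros Hr. assert (0 <= (r * x - y) ^ 2 / r)
    by (apply Rmult_le_pos; [apply pow2_ge_0|left; apply Rinv_0_lt_compat; auto]).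
  replace ((r * x ^ 2 + y ^ 2 / r) / 2) with (x * y + (r * x - y) ^ 2 / r / 2) by (field; lra).
  lra.
Qed.

Lemma le_one_add_count (v y : R) (N : nat) :
  0 <= v -> 0 <= y -> v <= INR N -> v * y <= 1 ->
  v <= 1 + sum_f_R0 (fun j => if (1 <=? j)%nat then (if Rle_dec (INR j * y) 1 then 1 else 0) else 0) N.
Proof.
  intros Hv Hy HvN Hvy. pose proof (sum_f_R0_indicator_ge v N) as H.
  rewrite Rmin_right in H by lra.
  enough (sum_f_R0 (fun j => if Rle_dec 1 (INR j) then if Rle_dec (INR j) v then 1 else 0 else 0) N
          <= sum_f_R0 (fun j => if (1 <=? j)%nat then (if Rle_dec (INR j * y) 1 then 1 else 0) else 0) N)
    by lra.
  apply sum_Rle. intros j _. destruct (Rle_dec 1 (INR j)) as [h1|h1].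
  - rewrite (proj2 (Nat.leb_le 1 j)) by (apply INR_le; simpl; lra).
    destruct (Rle_dec (INR j) v) as [h2|h2]; [|destruct Rle_dec; lra].
    destruct (Rle_dec (INR j * y) 1) as [h3|h3]; [lra|]. exfalso. nra.
  - destruct (1 <=? j)%nat; [destruct Rle_dec|]; lra.
Qed.

Lemma small_sin_near_nat (x y : R) (j K : nat) :
  0 <= x -> x + 1/2 < INR K + 1 -> y = Rabs (sin (PI * x)) -> (1 <= j)%nat ->
  (if Rle_dec (INR j * y) 1 then 1 else 0) <=
  sum_f_R0 (fun k => if Rle_dec (Rabs (x - INR k)) (/ INR j) then 1 else 0) K.
Proof.
  intros Hx HK Hy Hj.
  assert (Hnn : forall k, 0 <= (if Rle_dec (Rabs (x - INR k)) (/ INR j) then 1 else 0))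
    by (intros; destruct Rle_dec; lra).
  destruct (Rle_dec (INR j * y) 1) as [h|h]; [|apply cond_pos_sum; exact Hnn].
  destruct (dist_nat_le_Rabs_sin_PI x Hx) as [k [Hk1 Hk2]].
  assert (Hj' : 1 <= INR j) by (apply (le_INR 1); lia).
  assert (Hdist : Rabs (x - INR k) <= / INR j).
  { rewrite <- Hy in Hk2. apply (Rmult_le_reg_l (INR j)); [lra|].
    rewrite Rinv_r by lra. pose proof (Rabs_pos (x - INR k)). nra. }
  assert (Hk : (k <= K)%nat).
  { assert (INR k < INR (S K)) by (rewrite S_INR; lra). apply INR_lt in H. lia. }
  eapply Rle_trans; [|apply (sum_f_R0_term_le _ K k Hnn Hk)].
  cbv beta. destruct Rle_dec; lra.
Qed.

Lemma count_multiples_near_nat (theta : R) (j k M : nat) : 0 < theta -> (1 <= j)%nat ->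
  sum_f_R0 (fun h => if Rle_dec (Rabs (theta * INR h - INR k)) (/ INR j) then 1 else 0) M
  <= 2 / (INR j * theta) + 1.
Proof.
  intros Ht Hj. assert (Hj' : 1 <= INR j) by (apply (le_INR 1); lia).
  eapply Rle_trans;
    [apply (sum_f_R0_le_support_length _ ((INR k - / INR j) / theta) ((INR k + / INR j) / theta))|].
  - intros; destruct Rle_dec; lra.
  - intros n. destruct Rle_dec as [h|h]; intros Hn; [|lra]. apply Rabs_le_between in h.
    split; apply (Rmult_le_reg_l theta); try lra.
    + replace (theta * ((INR k - / INR j) / theta)) with (INR k - / INR j) by (field; lra). lra.
    + replace (theta * ((INR k + / INR j) / theta)) with (INR k + / INR j) by (field; lra). lra.
  - assert (0 < / INR j) by (apply Rinv_0_lt_compat; lra).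
    pose proof (Rmin_r (INR M) ((INR k + / INR j) / theta)).
    apply Rmax_lub.
    + assert (0 <= 2 / (INR j * theta)) by (apply Rlt_le, Rdiv_lt_0_compat; nra). lra.
    + replace (2 / (INR j * theta)) with ((INR k + / INR j) / theta - (INR k - / INR j) / theta)
        by (field; lra). lra.
Qed.

Lemma two_sin_half_mul_cos (A B x : R) :
  2 * sin (A / 2) * cos (A * x + B) =
  sin (A * (x + 1) + B - A / 2) - sin (A * x + B - A / 2).
Proof.
  replace (A * (x + 1) + B - A / 2) with ((A * x + B) + A / 2) by field.
  replace (A * x + B - A / 2) with ((A * x + B) - A / 2) by field.
  rewrite sin_plus, sin_minus. ring.
Qed.

Lemma sum_block_cos_mul_sin_le (c : nat -> bool) (A B : R) (M : nat) :
  (forall m n k, (m <= k <= n)%nat -> c m = true -> c n = true -> c k = true) ->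
  Rabs (sum_f_R0 (fun n => if c n then cos (A * INR n + B) else 0) M) * Rabs (sin (A / 2)) <= 1.
Proof.
  intros Hblock.
  destruct (sum_f_R0_telescope_block c (fun n => sin (A * INR n + B - A / 2)) M Hblock)
    as [u [v Huv]].
  assert (Hmul : 2 * sin (A / 2) * sum_f_R0 (fun n => if c n then cos (A * INR n + B) else 0) M
     = sin (A * INR u + B - A / 2) - sin (A * INR v + B - A / 2)).
  { rewrite <- Huv, scal_sum. apply sum_eq. intros n _. destruct (c n); [|ring].
    rewrite S_INR, <- two_sin_half_mul_cos. ring. }
  rewrite Rmult_comm. apply (Rmult_le_reg_l 2); [lra|].
  rewrite <- (Rabs_right 2) at 1 by lra. rewrite <- !Rabs_mult, <- Rmult_assoc, Hmul.
  pose proof (SIN_bound (A * INR u + B - A / 2)). pose proof (SIN_bound (A * INR v + B - A / 2)).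
  apply Rabs_le. lra.
Qed.

(** * Weyl sums over a window *)

(* With s = |q_j|^(1/2) and D = 2 d, the window cuts out the range of summation of S_j. *)
Definition window (P s D : R) (m : nat) : R :=
  if Rlt_dec P (s * INR m) then if Rlt_dec (s * INR m) (D * P) then 1 else 0 else 0.

Definition weyl_phase (c x : R) (m : nat) : R := 2 * PI * (x * c * INR m ^ 2).

Definition weyl_abs2 (P s D c : R) (M : nat) (x : R) : R :=
  (sum_f_R0 (fun m => window P s D m * cos (weyl_phase c x m)) M) ^ 2 +
  (sum_f_R0 (fun m => window P s D m * sin (weyl_phase c x m)) M) ^ 2.

Definition weyl_corr (P s D : R) (phi : nat -> R) (M h : nat) : R :=
  sum_f_R0 (fun n => window P s D (n + h) * window P s D n * cos (phi (n + h)%nat - phi n)) M.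

Lemma sum_cos_sin_sq (w phi : nat -> R) (M : nat) :
  (sum_f_R0 (fun m => w m * cos (phi m)) M) ^ 2 +
  (sum_f_R0 (fun m => w m * sin (phi m)) M) ^ 2 =
  sum_f_R0 (fun m => sum_f_R0 (fun n => w m * w n * cos (phi m - phi n)) M) M.
Proof.
  rewrite <- !Rsqr_pow2. unfold Rsqr. rewrite !sum_f_R0_mul, <- sum_plus.
  apply sum_eq; intros m _. rewrite <- sum_plus. apply sum_eq; intros n _.
  rewrite cos_minus. ring.
Qed.

Lemma weyl_abs2_nonneg P s D c M x : 0 <= weyl_abs2 P s D c M x.
Proof. apply Rplus_le_le_0_compat; apply pow2_ge_0. Qed.

Lemma weyl_abs2_expand P s D c M x : weyl_abs2 P s D c M x =
  sum_f_R0 (fun m => sum_f_R0 (fun n => window P s D m * window P s D n *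
     cos (2 * PI * c * (INR m ^ 2 - INR n ^ 2) * x)) M) M.
Proof.
  unfold weyl_abs2. rewrite sum_cos_sin_sq.
  apply sum_eq; intros m _; apply sum_eq; intros n _. unfold weyl_phase.
  f_equal. f_equal. ring.
Qed.

Section Window.

Variables (P s D : R).
Hypotheses (Hs : 1 <= s) (HP : 0 < P) (HD : 1 <= D).

Lemma window_range m : 0 <= window P s D m <= 1.
Proof. unfold window. destruct Rlt_dec; [destruct Rlt_dec|]; lra. Qed.

Lemma window_support m : window P s D m <> 0 -> P < s * INR m < D * P.
Proof. unfold window. destruct Rlt_dec; [destruct Rlt_dec|]; intros; lra. Qed.

Lemma window_idem m : window P s D m * window P s D m = window P s D m.
Proof. unfold window. destruct Rlt_dec; [destruct Rlt_dec|]; lra. Qed.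

Lemma sum_window_le (M : nat) :
  sum_f_R0 (window P s D) M <= (D - 1) * P / s + 1.
Proof.
  eapply Rle_trans; [apply (sum_f_R0_le_support_length _ (P / s) (D * P / s))|].
  - apply window_range.
  - intros n Hn. apply window_support in Hn.
    split; apply Rlt_le; apply (Rmult_lt_reg_l s); try lra; field_simplify; lra.
  - assert (0 <= (D - 1) * P / s) by (apply Rmult_le_pos; [nra|left; apply Rinv_0_lt_compat; lra]).
    apply Rmax_lub; [lra|].
    pose proof (Rmin_r (INR M) (D * P / s)).
    replace ((D - 1) * P / s) with (D * P / s - P / s) by (field; lra). lra.
Qed.

Lemma window_eq0_large (M k : nat) : D * P < INR M -> (M < k)%nat -> window P s D k = 0.
Proof.
  intros HM Hk. destruct (Req_dec (window P s D k) 0) as [E|E]; auto.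
  apply window_support in E. assert (INR M < INR k) by (apply lt_INR; lia).
  assert (INR k <= s * INR k) by (pose proof (pos_INR k); nra). lra.
Qed.

Lemma weyl_corr_far (phi : nat -> R) (M h : nat) :
  (D - 1) * P / s <= INR h -> weyl_corr P s D phi M h = 0.
Proof.
  intros Hh. apply sum_f_R0_eq0. intros n _.
  destruct (Req_dec (window P s D (n + h)) 0) as [E|E]; [rewrite E; ring|].
  destruct (Req_dec (window P s D n) 0) as [E2|E2]; [rewrite E2; ring|].
  apply window_support in E, E2. rewrite plus_INR in E.
  apply (Rmult_le_compat_l s) in Hh; [|lra].
  replace (s * ((D - 1) * P / s)) with ((D - 1) * P) in Hh by (field; lra).
  nra.
Qed.

Lemma weyl_corr_abs_le (phi : nat -> R) (M h : nat) :
  Rabs (weyl_corr P s D phi M h) <= (D - 1) * P / s + 1.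
Proof.
  eapply Rle_trans; [apply sum_f_R0_triangle|].
  eapply Rle_trans; [|apply (sum_window_le M)].
  apply sum_Rle. intros n _. rewrite !Rabs_mult.
  pose proof (window_range (n + h)). pose proof (window_range n).
  rewrite (Rabs_right (window P s D (n + h))), (Rabs_right (window P s D n)) by lra.
  assert (Rabs (cos (phi (n + h)%nat - phi n)) <= 1) by (apply Rabs_le, COS_bound).
  pose proof (Rabs_pos (cos (phi (n + h)%nat - phi n))).
  assert (window P s D (n + h) * Rabs (cos (phi (n + h)%nat - phi n)) <= 1)
    by (rewrite <- (Rmult_1_l 1); apply Rmult_le_compat; lra).
  nra.
Qed.


(* The phase difference at shift h is linear in n, and the indices n for which
   both n and n + h lie in the window form a block. *)
Lemma weyl_corr_mul_sin_le (c x : R) (M h : nat) :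
  Rabs (weyl_corr P s D (weyl_phase c x) M h) *
  Rabs (sin (PI * (2 * x * Rabs c * INR h))) <= 1.
Proof.
  set (inb := fun n => if Rlt_dec P (s * INR n) then
                         if Rlt_dec (s * INR (n + h)) (D * P) then true else false else false).
  set (A := 4 * PI * x * c * INR h). set (B := 2 * PI * x * c * INR h ^ 2).
  assert (Heq : weyl_corr P s D (weyl_phase c x) M h =
     sum_f_R0 (fun n => if inb n then cos (A * INR n + B) else 0) M).
  { apply sum_eq. intros n _. unfold inb, window, weyl_phase.
    replace (2 * PI * (x * c * INR (n + h) ^ 2) - 2 * PI * (x * c * INR n ^ 2))
      with (A * INR n + B) by (unfold A, B; rewrite plus_INR; ring).
    pose proof (pos_INR h). pose proof (pos_INR n). rewrite !plus_INR.
    assert (s * INR n <= s * (INR n + INR h)) by nra.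
    destruct (Rlt_dec P (s * INR n)); destruct (Rlt_dec (s * (INR n + INR h)) (D * P));
    destruct (Rlt_dec P (s * (INR n + INR h))); destruct (Rlt_dec (s * INR n) (D * P));
    try lra; ring. }
  assert (Hblock : forall m n k, (m <= k <= n)%nat -> inb m = true -> inb n = true -> inb k = true).
  { intros m n k Hk Hm Hn. unfold inb in *.
    assert (INR m <= INR k) by (apply le_INR; lia). assert (INR k <= INR n) by (apply le_INR; lia).
    rewrite !plus_INR in *.
    destruct (Rlt_dec P (s * INR m)); [|discriminate].
    destruct (Rlt_dec (s * (INR n + INR h)) (D * P));
      [|destruct (Rlt_dec P (s * INR n)); discriminate].
    destruct (Rlt_dec P (s * INR k)); [|exfalso; nra].
    destruct (Rlt_dec (s * (INR k + INR h)) (D * P)); [reflexivity|exfalso; nra]. }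
  assert (Hsin : Rabs (sin (A / 2)) = Rabs (sin (PI * (2 * x * Rabs c * INR h)))).
  { unfold A. destruct (Rle_dec 0 c).
    - rewrite (Rabs_right c) by lra. f_equal. f_equal. field.
    - rewrite (Rabs_left c) by lra.
      replace (4 * PI * x * c * INR h / 2) with (- (PI * (2 * x * - c * INR h))) by field.
      rewrite sin_neg. apply Rabs_Ropp. }
  rewrite Heq, <- Hsin. apply sum_block_cos_mul_sin_le, Hblock.
Qed.

Lemma weyl_abs2_eq_diag_corr (c x : R) (M : nat) : D * P < INR M ->
  weyl_abs2 P s D c M x = sum_f_R0 (window P s D) M +
    2 * sum_f_R0 (fun h => if (1 <=? h)%nat then weyl_corr P s D (weyl_phase c x) M h else 0) M.
Proof.
  intros HM. set (phi := weyl_phase c x). set (w := window P s D).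
  unfold weyl_abs2. fold phi. rewrite sum_cos_sin_sq.
  rewrite (sum_f_R0_square_sym (fun m n => w m * w n * cos (phi m - phi n))).
  2:{ intros m n. replace (phi n - phi m) with (- (phi m - phi n)) by ring. rewrite cos_neg. ring. }
  f_equal.
  { apply sum_eq; intros n _. unfold w. rewrite Rminus_diag, cos_0, window_idem. ring. }
  f_equal.
  rewrite (sum_eq _ (fun n => sum_f_R0 (fun h => if (1 <=? h)%nat
             then w (n + h)%nat * w n * cos (phi (n + h)%nat - phi n) else 0) M)).
  2:{ intros n _. apply (sum_f_R0_shift (fun m => w m * w n * cos (phi m - phi n))).
      intros k Hk. unfold w. rewrite (window_eq0_large M k) by auto. ring. }
  rewrite sum_f_R0_swap. apply sum_eq. intros h _. rewrite sum_f_R0_if. reflexivity.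
Qed.

End Window.

Section Differencing.

Variables (P s D c x : R) (M N K : nat).
Hypotheses (Hs : 1 <= s) (HP : 0 < P) (HD : 1 <= D) (Hx : 0 < x) (Hc : c <> 0).

Let L := (D - 1) * P / s.
Let theta := 2 * x * Rabs c.

Hypotheses (HN : L + 1 <= INR N) (HK : theta * L + 1/2 < INR K + 1).

Let near (h j k : nat) : R :=
  if Rle_dec (Rabs (theta * INR h - INR k)) (/ INR j) then 1 else 0.

Lemma window_length_nonneg : 0 <= L.
Proof. unfold L. apply Rmult_le_pos; [nra|left; apply Rinv_0_lt_compat; lra]. Qed.

Lemma differencing_theta_pos : 0 < theta.
Proof. unfold theta. pose proof (Rabs_pos_lt c Hc). nra. Qed.

(* A large correlation forces theta h to be close to an integer. *)
Lemma weyl_corr_le_count (h : nat) : (1 <= h)%nat ->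
  weyl_corr P s D (weyl_phase c x) M h <=
  (if Rlt_dec (INR h) L then 1 else 0) +
  sum_f_R0 (fun j => if (1 <=? j)%nat then sum_f_R0 (fun k => near h j k) K else 0) N.
Proof.
  intros Hh. pose proof window_length_nonneg. pose proof differencing_theta_pos.
  assert (Hpos : 0 <= sum_f_R0 (fun j => if (1 <=? j)%nat then sum_f_R0 (fun k => near h j k) K else 0) N).
  { apply cond_pos_sum. intros j. destruct (1 <=? j)%nat; [|lra].
    apply cond_pos_sum. intros k. unfold near. destruct Rle_dec; lra. }
  destruct (Rlt_dec (INR h) L) as [HhL|HhL].
  2:{ rewrite (weyl_corr_far P s D Hs) by (fold L; lra). lra. }
  set (v := Rabs (weyl_corr P s D (weyl_phase c x) M h)).
  set (y := Rabs (sin (PI * (theta * INR h)))).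
  assert (HvN : v <= INR N).
  { pose proof (weyl_corr_abs_le P s D Hs HP HD (weyl_phase c x) M h) as Hb. fold v in Hb.
    unfold L in HN. lra. }
  assert (Hvy : v * y <= 1) by (unfold v, y, theta; apply weyl_corr_mul_sin_le; lra).
  pose proof (le_one_add_count v y N (Rabs_pos _) (Rabs_pos _) HvN Hvy) as Hcount.
  assert (Hnear : sum_f_R0 (fun j => if (1 <=? j)%nat then (if Rle_dec (INR j * y) 1 then 1 else 0) else 0) N
        <= sum_f_R0 (fun j => if (1 <=? j)%nat then sum_f_R0 (fun k => near h j k) K else 0) N).
  { apply sum_Rle. intros j _. destruct (1 <=? j)%nat eqn:Ej; [|lra].
    apply Nat.leb_le in Ej. apply small_sin_near_nat; auto.
    - pose proof (pos_INR h). nra.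
    - assert (theta * INR h <= theta * L) by (apply Rmult_le_compat_l; lra). lra. }
  pose proof (RRle_abs (weyl_corr P s D (weyl_phase c x) M h)) as Habs. fold v in Habs. lra.
Qed.

Lemma sum_weyl_corr_le : (1 <= N)%nat ->
  sum_f_R0 (fun h => if (1 <=? h)%nat then weyl_corr P s D (weyl_phase c x) M h else 0) M
  <= L + (INR K + 1) * (2 * (1 + ln (INR N)) / theta + INR N).
Proof.
  intros HN1. pose proof window_length_nonneg. pose proof differencing_theta_pos.
  eapply Rle_trans.
  { apply sum_Rle. intros h _.
    instantiate (1 := fun h => (if (1 <=? h)%nat then (if Rlt_dec (INR h) L then 1 else 0) else 0) +
      sum_f_R0 (fun j => if (1 <=? j)%nat then sum_f_R0 (fun k => near h j k) K else 0) N).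
    cbv beta. destruct (1 <=? h)%nat eqn:Eh.
    - apply weyl_corr_le_count, Nat.leb_le, Eh.
    - rewrite Rplus_0_l. apply cond_pos_sum. intros j. destruct (1 <=? j)%nat; [|lra].
      apply cond_pos_sum. intros k. unfold near. destruct Rle_dec; lra. }
  rewrite sum_plus. apply Rplus_le_compat.
  - eapply Rle_trans; [apply (sum_f_R0_le_support_length _ 1 L)|].
    + intros n. destruct (1 <=? n)%nat; [destruct Rlt_dec|]; lra.
    + intros n. destruct (1 <=? n)%nat eqn:E; [destruct Rlt_dec|]; intros Hn; try lra.
      apply Nat.leb_le in E. split; [apply (le_INR 1); lia|lra].
    + apply Rmax_lub; [lra|]. pose proof (Rmin_r (INR M) L). lra.
  - rewrite sum_f_R0_swap.
    apply Rle_trans with (sum_f_R0 (fun j =>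
      ((if (1 <=? j)%nat then / INR j else 0) * (2 / theta) + (if (1 <=? j)%nat then 1 else 0))
      * (INR K + 1)) N).
    + apply sum_Rle. intros j _. rewrite sum_f_R0_if.
      destruct (1 <=? j)%nat eqn:Ej; [|lra]. apply Nat.leb_le in Ej.
      rewrite sum_f_R0_swap.
      replace ((/ INR j * (2 / theta) + 1) * (INR K + 1)) with ((2 / (INR j * theta) + 1) * INR (S K))
        by (rewrite S_INR; assert (0 < INR j) by (apply lt_0_INR; lia); field; lra).
      rewrite <- sum_cte.
      apply sum_Rle. intros k _. apply count_multiples_near_nat; auto.
    + rewrite <- scal_sum, sum_plus, <- scal_sum, sum_f_R0_ones.
      apply Rmult_le_compat_l; [pose proof (pos_INR K); lra|].
      pose proof (harmonic_le_1_ln N HN1).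
      replace (2 * (1 + ln (INR N)) / theta) with (2 / theta * (1 + ln (INR N))) by (field; lra).
      assert (0 < 2 / theta) by (apply Rdiv_lt_0_compat; lra).
      apply Rplus_le_compat_r, Rmult_le_compat_l; lra.
Qed.

Lemma weyl_abs2_differencing : D * P < INR M -> (1 <= N)%nat ->
  weyl_abs2 P s D c M x <= (L + 1) + 2 * (L + (INR K + 1) * (2 * (1 + ln (INR N)) / theta + INR N)).
Proof.
  intros HM HN1. rewrite (weyl_abs2_eq_diag_corr P s D Hs c x M HM).
  pose proof (sum_window_le P s D Hs HP HD M). pose proof (sum_weyl_corr_le HN1).
  unfold L in *. lra.
Qed.

End Differencing.

Section DifferencingArith.

Variables (s Dn P qM alpha L theta n k : R).
Hypotheses (Hs : 1 <= s) (HsqM : s * s <= qM) (HsP : s <= P) (HDn : 1 <= Dn) (Ha : 0 < alpha)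
  (HL : L = (2 * Dn - 1) * P / s) (Hth : theta = 2 * alpha * (s * s))
  (Hn : 0 <= n <= L + 2) (Hk : 0 <= k <= theta * L + 1) (HthL : theta * L <= s / 2).

Lemma differencing_sL_eq : s * L = (2 * Dn - 1) * P.
Proof. rewrite HL. field. lra. Qed.

Lemma differencing_s_le_qM : s <= qM.
Proof. assert (s * 1 <= s * s) by (apply Rmult_le_compat_l; lra). lra. Qed.

Lemma weyl_count_terms_le : s * s * ((L + 1) + 2 * L + 2 * ((k + 1) * n)) <= 24 * Dn * P * qM.
Proof.
  pose proof differencing_sL_eq. pose proof differencing_s_le_qM.
  assert (T1 : s * s * ((L + 1) + 2 * L) <= 6 * Dn * P * qM).
  { assert (s * (s * L) <= qM * ((2 * Dn - 1) * P))
      by (rewrite differencing_sL_eq; apply Rmult_le_compat_r; nra).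
    assert (s * s <= P * qM) by nra. nra. }
  assert (Hsn : s * n <= 3 * Dn * P) by nra.
  assert ((k + 1) * (s * n) <= 3 * s * (3 * Dn * P)) by (apply Rmult_le_compat; nra).
  assert (2 * s * ((k + 1) * (s * n)) <= 2 * s * (3 * s * (3 * Dn * P)))
    by (apply Rmult_le_compat_l; lra).
  assert (s * s * (Dn * P) <= qM * (Dn * P)) by (apply Rmult_le_compat_r; nra).
  nra.
Qed.

Lemma weyl_log_term_le (lam lam' : R) : / alpha <= 8 * Dn * P * qM -> 0 <= lam' <= lam ->
  s * s * (2 * ((k + 1) * (2 * lam' / theta))) <= 40 * lam * Dn * P * qM.
Proof.
  intros Hainv Hlam. pose proof differencing_sL_eq. pose proof differencing_s_le_qM.
  assert (Hth0 : 0 < theta) by (rewrite Hth; apply Rmult_lt_0_compat; [lra|nra]).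
  assert (HL0 : 0 <= L) by (rewrite HL; apply Rmult_le_pos; [nra|left; apply Rinv_0_lt_compat; lra]).
  assert (T : s * s * ((k + 1) / theta) <= 10 * Dn * P * qM).
  { assert (s * s * (2 / theta) = / alpha) by (rewrite Hth; field; lra).
    assert ((k + 1) / theta <= L + 2 / theta).
    { apply (Rmult_le_reg_l theta); [lra|]. field_simplify; lra. }
    assert (s * (s * L) <= qM * ((2 * Dn - 1) * P))
      by (rewrite differencing_sL_eq; apply Rmult_le_compat_r; nra).
    nra. }
  replace (s * s * (2 * ((k + 1) * (2 * lam' / theta)))) with (4 * lam' * (s * s * ((k + 1) / theta)))
    by (field; lra).
  assert (0 <= s * s * ((k + 1) / theta))
    by (apply Rmult_le_pos; [nra|apply Rmult_le_pos; [lra|left; apply Rinv_0_lt_compat; lra]]).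
  assert (lam' * (s * s * ((k + 1) / theta)) <= lam * (10 * Dn * P * qM))
    by (apply Rmult_le_compat; lra).
  lra.
Qed.

Lemma weyl_differencing_arith (lam lam' : R) : / alpha <= 8 * Dn * P * qM -> 0 <= lam' <= lam ->
  s * s * ((L + 1) + 2 * (L + (k + 1) * (2 * lam' / theta + n)))
  <= Dn * P * qM * (32 + 40 * lam).
Proof.
  intros Hainv Hlam.
  pose proof weyl_count_terms_le. pose proof (weyl_log_term_le lam lam' Hainv Hlam).
  replace (s * s * ((L + 1) + 2 * (L + (k + 1) * (2 * lam' / theta + n))))
    with (s * s * ((L + 1) + 2 * L + 2 * ((k + 1) * n))
          + s * s * (2 * ((k + 1) * (2 * lam' / theta)))) by ring.
  assert (0 <= Dn * P * qM) by (apply Rmult_le_pos; nra).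
  lra.
Qed.

End DifferencingArith.

Lemma minor_arc_theta_L_le (Dn P s alpha : R) : 1 <= Dn -> 0 < P -> 0 < s -> 0 < alpha ->
  alpha <= / (8 * Dn * P) -> 2 * alpha * (s * s) * ((2 * Dn - 1) * P / s) <= s / 2.
Proof.
  intros HDn HP Hs Ha Ha1.
  apply (Rmult_le_compat_r (8 * Dn * P)) in Ha1; [|nra].
  rewrite Rinv_l in Ha1 by nra.
  replace (2 * alpha * (s * s) * ((2 * Dn - 1) * P / s))
    with (alpha * (8 * Dn * P) * (s * (2 * Dn - 1) / (4 * Dn))) by (field; lra).
  apply Rle_trans with (1 * (s * (2 * Dn - 1) / (4 * Dn))).
  - apply Rmult_le_compat_r; [apply Rmult_le_pos; [nra|left; apply Rinv_0_lt_compat; lra]|lra].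
  - apply (Rmult_le_reg_r (4 * Dn)); [lra|]. field_simplify; nra.
Qed.

Lemma minor_arc_inv_alpha_le (Dn P qM alpha : R) : 1 <= Dn -> 0 < P -> 1 <= qM ->
  / (8 * Dn * P) * / sqrt qM <= alpha -> / alpha <= 8 * Dn * P * qM.
Proof.
  intros HDn HP HqM Ha0.
  assert (HsqM : 0 < sqrt qM) by (apply sqrt_lt_R0; lra).
  assert (H8 : 0 < 8 * Dn * P) by nra.
  assert (Ha : 0 < alpha).
  { eapply Rlt_le_trans; [|exact Ha0]. apply Rmult_lt_0_compat; apply Rinv_0_lt_compat; lra. }
  apply (Rmult_le_compat_r (8 * Dn * P * sqrt qM)) in Ha0; [|apply Rmult_le_pos; lra].
  replace (/ (8 * Dn * P) * / sqrt qM * (8 * Dn * P * sqrt qM)) with 1 in Ha0 by (field; lra).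
  apply (Rmult_le_reg_l alpha); [lra|]. rewrite Rinv_r by lra.
  assert (alpha * (8 * Dn * P) * sqrt qM <= alpha * (8 * Dn * P) * qM)
    by (apply Rmult_le_compat_l; [nra|apply sqrt_le_self, HqM]).
  lra.
Qed.

Lemma weyl_abs2_minor_arc_le (Dn P qM c alpha : R) (M : nat) :
  1 <= Rabs c -> Rabs c <= qM -> qM <= P -> 1 <= Dn -> 2 * Dn * P < INR M ->
  / (8 * Dn * P) * / sqrt qM <= alpha -> alpha <= / (8 * Dn * P) ->
  Rabs c * weyl_abs2 P (sqrt (Rabs c)) (2 * Dn) c M alpha
  <= Dn * P * qM * (32 + 40 * (1 + ln (4 * Dn * P))).
Proof.
  intros Hc1 HcqM HqMP HDn HM Ha0 Ha1.
  set (s := sqrt (Rabs c)) in *.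
  assert (Hs1 : 1 <= s) by (unfold s; rewrite <- sqrt_1; apply sqrt_le_1; lra).
  assert (Hss : s * s = Rabs c) by (unfold s; apply sqrt_sqrt; lra).
  assert (HsP : s <= P) by (pose proof (sqrt_le_self (Rabs c) Hc1); fold s in H; lra).
  assert (Hc : c <> 0) by (intro E; rewrite E, Rabs_R0 in Hc1; lra).
  assert (HP : 1 <= P) by lra.
  assert (Ha : 0 < alpha).
  { eapply Rlt_le_trans; [|exact Ha0].
    apply Rmult_lt_0_compat; apply Rinv_0_lt_compat; [nra|apply sqrt_lt_R0; lra]. }
  set (L := (2 * Dn - 1) * P / s).
  assert (HL0 : 0 <= L) by (apply Rmult_le_pos; [nra|left; apply Rinv_0_lt_compat; lra]).
  set (theta := 2 * alpha * Rabs c).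
  assert (HthL : theta * L <= s / 2)
    by (unfold theta, L; rewrite <- Hss; apply minor_arc_theta_L_le; lra).
  assert (Hainv : / alpha <= 8 * Dn * P * qM) by (apply minor_arc_inv_alpha_le; lra).
  set (N := Z.to_nat (up (L + 1))).
  assert (HN : L + 1 < INR N <= L + 2) by (unfold N; pose proof (INR_up_bounds (L + 1) ltac:(lra)); lra).
  assert (HN1 : (1 <= N)%nat) by (apply INR_le; simpl; lra).
  set (K := Z.to_nat (up (theta * L))).
  assert (HK : theta * L < INR K <= theta * L + 1)
    by (apply INR_up_bounds; apply Rmult_le_pos; [unfold theta; pose proof (Rabs_pos c); nra|lra]).
  pose proof (weyl_abs2_differencing P s (2 * Dn) c alpha M N K Hs1 ltac:(lra) ltac:(lra) Ha Hc
                ltac:(fold L; lra) ltac:(fold L theta; lra) ltac:(lra) HN1) as W.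
  fold L theta in W.
  assert (HlnN : 0 <= 1 + ln (INR N) <= 1 + ln (4 * Dn * P)).
  { assert (HN0 : 1 <= INR N) by (apply (le_INR 1); exact HN1).
    assert (L <= 2 * Dn * P).
    { unfold L. apply (Rmult_le_reg_r s); [lra|].
      replace ((2 * Dn - 1) * P / s * s) with ((2 * Dn - 1) * P) by (field; lra).
      assert (2 * Dn * P * 1 <= 2 * Dn * P * s) by (apply Rmult_le_compat_l; nra). lra. }
    assert (1 * 1 <= Dn * P) by (apply Rmult_le_compat; lra).
    assert (HN4 : INR N <= 4 * Dn * P) by lra.
    split.
    - pose proof (ln_le 1 (INR N) ltac:(lra) HN0) as Hln. rewrite ln_1 in Hln. lra.
    - apply Rplus_le_compat_l, ln_le; lra. }
  rewrite <- Hss. eapply Rle_trans; [apply Rmult_le_compat_l; [nra|exact W]|].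
  apply (weyl_differencing_arith s Dn P qM alpha L theta); auto.
  - rewrite Hss. exact HcqM.
  - unfold theta. rewrite Hss. ring.
  - pose proof (pos_INR N). lra.
  - pose proof (pos_INR K). lra.
Qed.

(** * The mean value estimate *)

Lemma RInt_sum_f_R0 (f : nat -> R -> R) (N : nat) (a b : R) :
  (forall i, ex_RInt (f i) a b) ->
  ex_RInt (fun x => sum_f_R0 (fun i => f i x) N) a b /\
  RInt (fun x => sum_f_R0 (fun i => f i x) N) a b = sum_f_R0 (fun i => RInt (f i) a b) N.
Proof.
  intros Hf. induction N as [|N [IH1 IH2]]; simpl; [split; [apply Hf|reflexivity]|].
  split.
  - apply (ex_RInt_plus (fun x => sum_f_R0 (fun i => f i x) N) (f (S N))); auto.
  - rewrite <- IH2. apply (RInt_plus (fun x => sum_f_R0 (fun i => f i x) N) (f (S N))); auto.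
Qed.

Lemma continuous_scal_cos (k kap x : R) : continuous (fun y => k * cos (kap * y)) x.
Proof. apply (@ex_derive_continuous R_AbsRing R_NormedModule). auto_derive. auto. Qed.

Lemma ex_RInt_cos_mul (k a b : R) : ex_RInt (fun x => cos (k * x)) a b.
Proof.
  apply (@ex_RInt_continuous R_CompleteNormedModule). intros.
  apply (@ex_derive_continuous R_AbsRing R_NormedModule). auto_derive. auto.
Qed.

Lemma RInt_cos_abs_le (k a b : R) : k <> 0 ->
  Rabs (RInt (fun x => cos (k * x)) a b) <= 2 / Rabs k.
Proof.
  intros Hk.
  assert (H : is_RInt (fun x => cos (k * x)) a b (minus (sin (k * b) / k) (sin (k * a) / k))).
  { apply (is_RInt_derive (fun x => sin (k * x) / k)).
    - intros x _. auto_derive; [auto|]. field. auto.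
    - intros x _. apply (@ex_derive_continuous R_AbsRing R_NormedModule). auto_derive. auto. }
  rewrite (is_RInt_unique _ _ _ _ H). unfold minus, plus, opp. simpl.
  replace (sin (k * b) / k + - (sin (k * a) / k)) with ((sin (k * b) - sin (k * a)) / k)
    by (field; auto).
  unfold Rdiv. rewrite Rabs_mult, Rabs_inv. apply Rmult_le_compat_r.
  - left. apply Rinv_0_lt_compat, Rabs_pos_lt, Hk.
  - pose proof (SIN_bound (k * b)). pose proof (SIN_bound (k * a)). apply Rabs_le. lra.
Qed.

Section MeanValue.

Variables (P s D c a b : R).
Hypotheses (Hs : 1 <= s) (HP : 0 < P) (HD : 1 <= D) (Hc : Rabs c = s * s) (Hab : a <= b).

Let w := window P s D.
Let freq (m n : nat) := 2 * PI * c * (INR m ^ 2 - INR n ^ 2).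

(* The key point: n + m > 2 P / s for m, n in the window. *)
Lemma RInt_cos_window_pair_le (m n : nat) : (m < n)%nat -> w m <> 0 -> w n <> 0 ->
  Rabs (RInt (fun x => cos (freq m n * x)) a b) <= / (INR n - INR m) / (2 * PI * P * s).
Proof.
  intros Hmn Hm Hn. pose proof PI_RGT_0 as Hpi.
  apply window_support in Hm, Hn. apply lt_INR in Hmn.
  assert (Hsum : 2 * P <= s * (INR n + INR m)) by lra.
  assert (Hk : Rabs (freq m n) = 2 * PI * (s * s) * ((INR n - INR m) * (INR n + INR m))).
  { unfold freq. rewrite !Rabs_mult, Hc, (Rabs_right 2), (Rabs_right PI), Rabs_left by nra. ring. }
  assert (Hkpos : 2 * PI * P * s * (INR n - INR m) * 2 <= Rabs (freq m n)).
  { rewrite Hk. replace (2 * PI * (s * s) * ((INR n - INR m) * (INR n + INR m)))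
      with (2 * PI * s * (INR n - INR m) * (s * (INR n + INR m))) by ring.
    replace (2 * PI * P * s * (INR n - INR m) * 2) with (2 * PI * s * (INR n - INR m) * (2 * P)) by ring.
    apply Rmult_le_compat_l; [|lra]. apply Rmult_le_pos; [|lra]. nra. }
  assert (H0 : 0 < 2 * PI * P * s * (INR n - INR m)) by
    (apply Rmult_lt_0_compat; [|lra]; apply Rmult_lt_0_compat; [|lra]; nra).
  eapply Rle_trans; [apply RInt_cos_abs_le; intro E; rewrite E, Rabs_R0 in Hkpos; lra|].
  apply Rle_trans with (2 / (2 * PI * P * s * (INR n - INR m) * 2)).
  - unfold Rdiv. apply Rmult_le_compat_l; [lra|]. apply Rinv_le_contravar; lra.
  - right. field. lra.
Qed.

Lemma window_pair_RInt_le (m n : nat) :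
  w m * w n * RInt (fun x => cos (freq m n * x)) a b <=
  (if (m =? n)%nat then w m * (b - a) else 0) +
  w m * (if (m <? n)%nat then / (INR n - INR m) else 0) / (2 * PI * P * s) +
  w n * (if (n <? m)%nat then / (INR m - INR n) else 0) / (2 * PI * P * s).
Proof.
  pose proof PI_RGT_0. pose proof (window_range P s D m) as Wm. pose proof (window_range P s D n) as Wn.
  fold w in Wm, Wn.
  assert (HK : 0 < 2 * PI * P * s)
    by (apply Rmult_lt_0_compat; [apply Rmult_lt_0_compat; [apply Rmult_lt_0_compat|]|]; lra).
  assert (Hoff : forall i j, (i < j)%nat ->
    w i * w j * RInt (fun x => cos (freq i j * x)) a b <= w i * / (INR j - INR i) / (2 * PI * P * s)).
  { intros i j Hij. pose proof (window_range P s D i) as Wi. pose proof (window_range P s D j) as Wj.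
    fold w in Wi, Wj.
    assert (0 < / (INR j - INR i)) by (apply lt_INR in Hij; apply Rinv_0_lt_compat; lra).
    assert (0 <= / (INR j - INR i) / (2 * PI * P * s))
      by (apply Rmult_le_pos; [lra|left; apply Rinv_0_lt_compat; lra]).
    destruct (Req_dec (w i) 0) as [E|Ei]; [rewrite E; lra|].
    destruct (Req_dec (w j) 0) as [E|Ej]; [rewrite E; nra|].
    assert (w i = 1 /\ w j = 1) as [-> ->]
      by (unfold w, window in *; split; repeat destruct Rlt_dec; lra).
    pose proof (RInt_cos_window_pair_le i j Hij Ei Ej). unfold Rdiv in *.
    rewrite !Rmult_1_l. eapply Rle_trans; [apply RRle_abs|]. lra. }
  destruct (Nat.lt_total m n) as [Hlt|[<-|Hlt]].
  - rewrite (proj2 (Nat.eqb_neq m n)), (proj2 (Nat.ltb_lt m n)), (proj2 (Nat.ltb_ge n m)) by lia.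
    pose proof (Hoff m n Hlt). rewrite Rmult_0_r. unfold Rdiv at 2. lra.
  - rewrite Nat.eqb_refl, Nat.ltb_irrefl, (RInt_ext _ (fun _ => 1)).
    + rewrite RInt_const. unfold scal; simpl; unfold mult; simpl.
      unfold w. rewrite window_idem. lra.
    + intros x _. unfold freq. rewrite Rminus_diag, Rmult_0_r, Rmult_0_l. apply cos_0.
  - rewrite (proj2 (Nat.eqb_neq m n)), (proj2 (Nat.ltb_lt n m)), (proj2 (Nat.ltb_ge m n)) by lia.
    rewrite (RInt_ext _ (fun x => cos (freq n m * x))).
    + pose proof (Hoff n m Hlt). rewrite Rmult_0_r. unfold Rdiv at 1. lra.
    + intros x _. unfold freq. rewrite <- cos_neg. f_equal. ring.
Qed.

Lemma RInt_weyl_abs2_expand (M : nat) :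
  ex_RInt (weyl_abs2 P s D c M) a b /\
  RInt (weyl_abs2 P s D c M) a b =
  sum_f_R0 (fun m => sum_f_R0 (fun n => w m * w n * RInt (fun x => cos (freq m n * x)) a b) M) M.
Proof.
  set (g := fun m n x => w m * w n * cos (freq m n * x)).
  assert (Hg : forall m n, ex_RInt (g m n) a b)
    by (intros; apply (@ex_RInt_continuous R_CompleteNormedModule); intros; apply continuous_scal_cos).
  assert (Hin : forall m, ex_RInt (fun x => sum_f_R0 (fun n => g m n x) M) a b /\
     RInt (fun x => sum_f_R0 (fun n => g m n x) M) a b = sum_f_R0 (fun n => RInt (g m n) a b) M)
    by (intros m; apply (RInt_sum_f_R0 (g m)); auto).
  destruct (RInt_sum_f_R0 (fun m x => sum_f_R0 (fun n => g m n x) M) M a b (fun m => proj1 (Hin m)))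
    as [Hex Hr].
  assert (HZ : forall x, weyl_abs2 P s D c M x = sum_f_R0 (fun m => sum_f_R0 (fun n => g m n x) M) M)
    by (intros; rewrite weyl_abs2_expand; apply sum_eq; intros; apply sum_eq; intros;
        unfold g, freq; f_equal; f_equal; ring).
  split; [eapply ex_RInt_ext; [|exact Hex]; intros x _; symmetry; apply HZ|].
  rewrite (RInt_ext _ _ _ _ (fun x _ => HZ x)), Hr.
  apply sum_eq. intros m _. rewrite (proj2 (Hin m)). apply sum_eq. intros n _.
  exact (RInt_scal (fun x => cos (freq m n * x)) a b (w m * w n) (ex_RInt_cos_mul _ a b)).
Qed.

Lemma sum_window_harmonic_le (M : nat) (K : R) : 0 < K ->
  sum_f_R0 (fun m => sum_f_R0 (fun n => w m * (if (m <? n)%nat then / (INR n - INR m) else 0) / K) M) M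
  <= sum_f_R0 w M * (1 + ln (INR M + 1)) / K.
Proof.
  intros HK. set (lam := 1 + ln (INR M + 1)).
  apply Rle_trans with (sum_f_R0 (fun m => w m * (lam / K)) M).
  - apply sum_Rle. intros m _.
    rewrite (sum_eq _ (fun n => (if (m <? n)%nat then / (INR n - INR m) else 0) * (w m / K)))
      by (intros; unfold Rdiv; ring).
    rewrite <- scal_sum. replace (w m * (lam / K)) with (w m / K * lam) by (unfold Rdiv; ring).
    apply Rmult_le_compat_l; [|apply harmonic_shift_le].
    apply Rmult_le_pos; [apply window_range|left; apply Rinv_0_lt_compat; lra].
  - right. rewrite <- scal_sum. unfold Rdiv. ring.
Qed.

Lemma RInt_weyl_abs2_le (M : nat) :
  ex_RInt (weyl_abs2 P s D c M) a b /\
  RInt (weyl_abs2 P s D c M) a b <= ((D - 1) * P / s + 1) * (b - a) +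
     ((D - 1) * P / s + 1) * (1 + ln (INR M + 1)) / (PI * P * s).
Proof.
  destruct (RInt_weyl_abs2_expand M) as [Hex ->]. split; [exact Hex|].
  pose proof PI_RGT_0 as Hpi.
  set (K := 2 * PI * P * s).
  assert (HK : 0 < K)
    by (unfold K; apply Rmult_lt_0_compat; [apply Rmult_lt_0_compat; [apply Rmult_lt_0_compat|]|]; lra).
  eapply Rle_trans; [apply sum_Rle; intros m _; apply sum_Rle; intros n _; apply window_pair_RInt_le|].
  fold K. rewrite (sum_eq _ (fun m => sum_f_R0 (fun n => if (m =? n)%nat then w m * (b - a) else 0) M
     + sum_f_R0 (fun n => w m * (if (m <? n)%nat then / (INR n - INR m) else 0) / K) M
     + sum_f_R0 (fun n => w n * (if (n <? m)%nat then / (INR m - INR n) else 0) / K) M))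
    by (intros m _; rewrite <- !sum_plus; reflexivity).
  rewrite !sum_plus, (sum_f_R0_swap (fun m n => w n * (if (n <? m)%nat then / (INR m - INR n) else 0) / K)).
  rewrite (sum_eq (fun m => sum_f_R0 (fun n => if (m =? n)%nat then w m * (b - a) else 0) M)
             (fun m => w m * (b - a))) by (intros m Hm; apply (sum_f_R0_delta (fun _ => w m * (b - a))), Hm).
  rewrite <- scal_sum.
  pose proof (sum_window_harmonic_le M K HK).
  set (L := (D - 1) * P / s). set (lam := 1 + ln (INR M + 1)) in *.
  assert (HW : sum_f_R0 w M <= L + 1) by (apply sum_window_le; lra).
  assert (Hlam : 0 <= lam)
    by (unfold lam; rewrite <- ln_1; pose proof (pos_INR M); pose proof (ln_le 1 (INR M + 1)); lra).
  replace ((L + 1) * lam / (PI * P * s)) with (2 * ((L + 1) * lam / K)) by (unfold K; field; lra).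
  assert ((b - a) * sum_f_R0 w M <= (L + 1) * (b - a)) by (rewrite Rmult_comm; apply Rmult_le_compat_r; lra).
  assert (sum_f_R0 w M * lam / K <= (L + 1) * lam / K).
  { unfold Rdiv. apply Rmult_le_compat_r; [left; apply Rinv_0_lt_compat; lra|].
    apply Rmult_le_compat_r; lra. }
  lra.
Qed.

End MeanValue.

Lemma RInt_weyl_abs2_minor_arc_le (Dn P c r a0 a1 : R) (M : nat) :
  1 <= Rabs c -> Rabs c <= P -> 1 <= Dn -> 0 < r -> 0 <= a0 <= a1 ->
  a1 <= / (8 * Dn * P) * / r ->
  ex_RInt (weyl_abs2 P (sqrt (Rabs c)) (2 * Dn) c M) a0 a1 /\
  Rabs c * RInt (weyl_abs2 P (sqrt (Rabs c)) (2 * Dn) c M) a0 a1 <=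
    sqrt (Rabs c) / (4 * r) + 2 * Dn * (1 + ln (INR M + 1)).
Proof.
  intros Hc1 HcP HDn Hr Ha Ha1.
  set (s := sqrt (Rabs c)).
  assert (Hs1 : 1 <= s) by (unfold s; rewrite <- sqrt_1; apply sqrt_le_1; lra).
  assert (Hss : s * s = Rabs c) by (unfold s; apply sqrt_sqrt; lra).
  assert (HsP : s <= P) by (pose proof (sqrt_le_self (Rabs c) Hc1); fold s in H; lra).
  destruct (RInt_weyl_abs2_le P s (2 * Dn) c a0 a1 Hs1 ltac:(lra) ltac:(lra) (eq_sym Hss)
              ltac:(lra) M) as [Hex Hb].
  split; [exact Hex|].
  set (lam := 1 + ln (INR M + 1)) in *.
  assert (Hlam : 0 <= lam)
    by (unfold lam; rewrite <- ln_1; pose proof (pos_INR M); pose proof (ln_le 1 (INR M + 1)); lra).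
  assert (HsL : s * ((2 * Dn - 1) * P / s + 1) <= 2 * Dn * P)
    by (replace (s * ((2 * Dn - 1) * P / s + 1)) with ((2 * Dn - 1) * P + s) by (field; lra); lra).
  assert (HsL0 : 0 <= s * ((2 * Dn - 1) * P / s + 1))
    by (replace (s * ((2 * Dn - 1) * P / s + 1)) with ((2 * Dn - 1) * P + s) by (field; lra); nra).
  assert (T1 : s * s * (((2 * Dn - 1) * P / s + 1) * (a1 - a0)) <= s / (4 * r)).
  { replace (s / (4 * r)) with (s * (2 * Dn * P) * (/ (8 * Dn * P) * / r)) by (field; lra).
    replace (s * s * (((2 * Dn - 1) * P / s + 1) * (a1 - a0)))
      with (s * (s * ((2 * Dn - 1) * P / s + 1)) * (a1 - a0)) by ring.
    apply Rmult_le_compat; [apply Rmult_le_pos; lra|lra|apply Rmult_le_compat_l; lra|lra]. }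
  assert (T2 : s * s * (((2 * Dn - 1) * P / s + 1) * lam / (PI * P * s)) <= 2 * Dn * lam).
  { pose proof PI_ge_3.
    replace (s * s * (((2 * Dn - 1) * P / s + 1) * lam / (PI * P * s)))
      with (s * ((2 * Dn - 1) * P / s + 1) * lam / P / PI) by (field; lra).
    set (Y := s * ((2 * Dn - 1) * P / s + 1) * lam / P).
    assert (HY : 0 <= Y <= 2 * Dn * lam).
    { unfold Y. split; [apply Rmult_le_pos; [nra|left; apply Rinv_0_lt_compat; lra]|].
      apply (Rmult_le_reg_r P); [lra|]. unfold Rdiv. rewrite Rmult_assoc, Rinv_l, Rmult_1_r by lra.
      assert (s * ((2 * Dn - 1) * P * / s + 1) * lam <= 2 * Dn * P * lam)
        by (apply Rmult_le_compat_r; [lra|exact HsL]).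
      lra. }
    assert (/ PI <= 1) by (rewrite <- Rinv_1; apply Rinv_le_contravar; lra).
    assert (0 < / PI) by (apply Rinv_0_lt_compat; lra).
    unfold Rdiv at 1. nra. }
  rewrite <- Hss. apply (Rmult_le_compat_l (s * s)) in Hb; [|nra].
  rewrite Rmult_plus_distr_l in Hb. lra.
Qed.

(** * Products *)

Fixpoint prodn (t : nat -> R) (n : nat) : R :=
  match n with O => 1 | S k => prodn t k * t k end.

Lemma fold_right_Rmult_map_seq (t : nat -> R) (n : nat) :
  fold_right Rmult 1 (map t (seq 0 n)) = prodn t n.
Proof.
  induction n as [|n IH]; [reflexivity|].
  rewrite seq_S, map_app, fold_right_app. simpl. rewrite <- IH.
  generalize (map t (seq 0 n)). intros l. induction l as [|x l IHl]; simpl; [ring|].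
  rewrite IHl. ring.
Qed.

Lemma prodn_ext (f g : nat -> R) (n : nat) :
  (forall j, (j < n)%nat -> f j = g j) -> prodn f n = prodn g n.
Proof.
  induction n as [|n IH]; simpl; intros H; [reflexivity|].
  rewrite IH, H; [reflexivity|lia|intros; apply H; lia].
Qed.

Lemma prodn_mul (f g : nat -> R) (n : nat) :
  prodn (fun j => f j * g j) n = prodn f n * prodn g n.
Proof. induction n as [|n IH]; simpl; [ring|]. rewrite IH. ring. Qed.

Lemma prodn_nonneg (t : nat -> R) (n : nat) : (forall j, (j < n)%nat -> 0 <= t j) -> 0 <= prodn t n.
Proof.
  induction n as [|n IH]; simpl; intros H; [lra|].
  apply Rmult_le_pos; [apply IH; intros; apply H|apply H]; lia.
Qed.

Lemma prodn_pos (t : nat -> R) (n : nat) : (forall j, (j < n)%nat -> 0 < t j) -> 0 < prodn t n.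
Proof.
  induction n as [|n IH]; simpl; intros H; [lra|].
  apply Rmult_lt_0_compat; [apply IH; intros; apply H|apply H]; lia.
Qed.

Lemma sqrt_prodn (t : nat -> R) (n : nat) : (forall j, (j < n)%nat -> 0 <= t j) ->
  sqrt (prodn t n) = prodn (fun j => sqrt (t j)) n.
Proof.
  induction n as [|n IH]; simpl; intros H; [apply sqrt_1|].
  rewrite sqrt_mult, IH;
    [reflexivity|intros; apply H; lia|apply prodn_nonneg; intros; apply H; lia|apply H; lia].
Qed.

Lemma prodn_le_pow (t : nat -> R) (V : R) (n : nat) :
  (forall j, (j < n)%nat -> 0 <= t j <= V) -> prodn t n <= V ^ n.
Proof.
  induction n as [|n IH]; simpl; intros H; [lra|].
  rewrite Rmult_comm. apply Rmult_le_compat; [apply H; lia|apply prodn_nonneg; intros; apply H; lia|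
    apply H; lia|apply IH; intros; apply H; lia].
Qed.

Lemma prodn_mul_update (t : nat -> R) (a n : nat) (y : R) : (a < n)%nat ->
  prodn t n * y = prodn (fun j => if (j =? a)%nat then y else t j) n * t a.
Proof.
  induction n as [|n IH]; intros Ha; [lia|]. simpl.
  destruct (Nat.eq_dec a n) as [<-|Hne].
  - rewrite Nat.eqb_refl, (prodn_ext (fun j => if (j =? a)%nat then y else t j) t a); [ring|].
    intros j Hj. rewrite (proj2 (Nat.eqb_neq j a)) by lia. reflexivity.
  - rewrite (proj2 (Nat.eqb_neq n a)) by lia.
    replace (prodn t n * t n * y) with (prodn t n * y * t n) by ring.
    rewrite IH by lia. ring.
Qed.

Lemma prodn_le_pow_two (t : nat -> R) (V : R) (a b d : nat) :
  (a < d)%nat -> (b < d)%nat -> a <> b -> 0 < V ->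
  (forall j, (j < d)%nat -> 0 <= t j) ->
  (forall j, (j < d)%nat -> j <> a -> j <> b -> t j <= V) ->
  prodn t d <= V ^ (d - 2) * t a * t b.
Proof.
  intros Ha Hb Hab HV Ht HtV.
  set (u := fun j => if (j =? a)%nat then V else t j).
  set (u' := fun j => if (j =? b)%nat then V else u j).
  assert (Hu : prodn t d * V * V = prodn u' d * t a * t b).
  { unfold u'. rewrite (prodn_mul_update t a d V Ha), Rmult_assoc, (Rmult_comm (t a)), <- Rmult_assoc.
    fold u. rewrite (prodn_mul_update u b d V Hb).
    unfold u at 2. rewrite (proj2 (Nat.eqb_neq b a)) by auto. ring. }
  assert (Hu' : prodn u' d <= V ^ d).
  { apply prodn_le_pow. intros j Hj. unfold u', u.
    destruct (j =? b)%nat eqn:Eb; [lra|]. destruct (j =? a)%nat eqn:Ea; [lra|].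
    apply Nat.eqb_neq in Ea, Eb. split; [apply Ht|apply HtV]; auto. }
  assert (HVd : V ^ d = V ^ (d - 2) * V * V).
  { replace d with (d - 2 + 2)%nat at 1 by lia. rewrite pow_add. simpl. ring. }
  assert (0 <= t a * t b) by (apply Rmult_le_pos; apply Ht; auto).
  apply (Rmult_le_reg_r (V * V)); [nra|].
  rewrite <- Rmult_assoc, Hu.
  replace (V ^ (d - 2) * t a * t b * (V * V)) with (V ^ d * (t a * t b)) by (rewrite HVd; ring).
  rewrite Rmult_assoc. apply Rmult_le_compat_r; auto.
Qed.

Lemma RInt_prodn_le (t : nat -> R -> R) (d a b : nat) (x0 x1 V r : R) :
  x0 <= x1 -> (a < d)%nat -> (b < d)%nat -> a <> b -> 0 < V -> 0 < r ->
  (forall j x, (j < d)%nat -> 0 <= t j x) ->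
  (forall j x, (j < d)%nat -> x0 <= x <= x1 -> t j x <= V) ->
  ex_RInt (fun x => prodn (fun j => t j x) d) x0 x1 ->
  ex_RInt (fun x => t a x ^ 2) x0 x1 -> ex_RInt (fun x => t b x ^ 2) x0 x1 ->
  RInt (fun x => prodn (fun j => t j x) d) x0 x1 <=
  V ^ (d - 2) * (r * RInt (fun x => t a x ^ 2) x0 x1 + RInt (fun x => t b x ^ 2) x0 x1 / r) / 2.
Proof.
  intros Hx Ha Hb Hab HV Hr Ht HtV Hexp Hexa Hexb.
  set (k := V ^ (d - 2) / 2).
  set (Bnd := fun x => k * r * t a x ^ 2 + k / r * t b x ^ 2).
  assert (Hk : 0 <= k) by (unfold k; apply Rmult_le_pos; [apply pow_le; lra|lra]).
  assert (Hexa' : ex_RInt (fun x => k * r * t a x ^ 2) x0 x1)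
    by exact (ex_RInt_scal (fun x => t a x ^ 2) x0 x1 (k * r) Hexa).
  assert (Hexb' : ex_RInt (fun x => k / r * t b x ^ 2) x0 x1)
    by exact (ex_RInt_scal (fun x => t b x ^ 2) x0 x1 (k / r) Hexb).
  assert (HexB : ex_RInt Bnd x0 x1) by exact (ex_RInt_plus _ _ x0 x1 Hexa' Hexb').
  assert (HRB : RInt Bnd x0 x1 =
    k * r * RInt (fun x => t a x ^ 2) x0 x1 + k / r * RInt (fun x => t b x ^ 2) x0 x1).
  { rewrite (RInt_plus _ _ x0 x1 Hexa' Hexb' : RInt Bnd x0 x1 = _).
    rewrite (RInt_scal (fun x => t a x ^ 2) _ _ _ Hexa : RInt (fun x => k * r * t a x ^ 2) x0 x1 = _),
            (RInt_scal (fun x => t b x ^ 2) _ _ _ Hexb : RInt (fun x => k / r * t b x ^ 2) x0 x1 = _).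
    reflexivity. }
  apply Rle_trans with (RInt Bnd x0 x1); [|right; rewrite HRB; unfold k; field; lra].
  apply RInt_le; auto. intros x Hx'.
  eapply Rle_trans; [apply (prodn_le_pow_two (fun j => t j x) V a b d); auto|].
  - intros j Hj _ _. apply HtV; auto; lra.
  - unfold Bnd, k. rewrite Rmult_assoc.
    apply Rle_trans with (V ^ (d - 2) * ((r * t a x ^ 2 + t b x ^ 2 / r) / 2)).
    + apply Rmult_le_compat_l; [apply pow_le; lra|apply mul_le_amgm; auto].
    + right. field. lra.
Qed.

(** * The size of P *)

Lemma le_of_ln_le (x y : R) : 0 < y -> ln x <= ln y -> x <= y.
Proof.
  intros Hy H. destruct (Rle_lt_dec x y) as [h|h]; [exact h|].
  pose proof (ln_increasing y x Hy h). lra.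
Qed.

(* This is the only place where the value of beta matters. *)
Lemma beta_bound (r s d : nat) : (1 <= r)%nat -> (1 <= s)%nat -> (r + s = d)%nat -> (5 <= d)%nat ->
  INR d - 5/2 <= (INR d - 4) * (/2 + beta r s).
Proof.
  intros Hr Hs Hd H5. unfold beta. cbv zeta.
  set (r' := Nat.max r s). set (s' := Nat.min r s).
  assert (Hle : (s' <= r')%nat) by (unfold r', s'; lia).
  assert (Hs1 : (1 <= s')%nat) by (unfold s'; lia).
  assert (ED : INR d = INR r' + INR s') by (rewrite <- plus_INR; f_equal; unfold r', s'; lia).
  assert (H5' : 5 <= INR d) by (replace 5 with (INR 5) by (simpl; lra); apply le_INR; lia).
  destruct (Nat.leb (s' + 3) r') eqn:E1; [|destruct (Nat.leb (s' + 1) r') eqn:E2].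
  - apply Nat.leb_le in E1.
    assert (HS : 1 <= INR s') by (apply (le_INR 1); lia).
    assert (HR : INR s' + 3 <= INR r')
      by (replace 3 with (INR 3) by (simpl; lra); rewrite <- plus_INR; apply le_INR; lia).
    replace ((INR d - 4) * (/ 2 + INR r' / (2 * INR s'))) with ((INR d - 4) * INR d / (2 * INR s'))
      by (rewrite ED; field; lra).
    apply (Rmult_le_reg_r (2 * INR s')); [lra|]. unfold Rdiv.
    rewrite Rmult_assoc, Rinv_l, Rmult_1_r by lra. nra.
  - apply Nat.leb_gt in E1. apply Nat.leb_le in E2.
    assert (HS : 2 <= INR s') by (replace 2 with (INR 2) by (simpl; lra); apply le_INR; lia).
    assert (HD1 : 2 * INR s' + 1 <= INR d)
      by (rewrite ED; assert (INR s' + 1 <= INR r') by (rewrite <- S_INR; apply le_INR; lia); lra).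
    assert (HD2 : INR d <= 2 * INR s' + 2).
    { rewrite ED. assert (INR r' <= INR s' + 2)
        by (replace 2 with (INR 2) by (simpl; lra); rewrite <- plus_INR; apply le_INR; lia). lra. }
    replace ((INR d - 4) * (/ 2 + (INR s' + 2) / (2 * (INR s' - 1))))
      with ((INR d - 4) * (2 * INR s' + 1) / (2 * (INR s' - 1))) by (field; lra).
    apply (Rmult_le_reg_r (2 * (INR s' - 1))); [lra|]. unfold Rdiv.
    rewrite Rmult_assoc, Rinv_l, Rmult_1_r by lra. nra.
  - apply Nat.leb_gt in E1, E2. assert (r' = s') by lia.
    assert (HS : 3 <= INR s') by (replace 3 with (INR 3) by (simpl; lra); apply le_INR; lia).
    assert (INR d = 2 * INR s') by (rewrite ED, H; ring).
    replace ((INR d - 4) * (/ 2 + (INR s' + 1) / (2 * (INR s' - 2)))) with (2 * INR s' - 1)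
      by (rewrite H0; field; lra).
    lra.
Qed.

(* The log-power loss (ln L)^(d-2) is absorbed by the extra factor exp(delta L) in P. *)
Lemma ln_mul_le_delta (D L : R) : 5 <= D -> exp 1 <= L ->
  (D - 2) * ln L <= 10 * D ^ 2 / ln L * L.
Proof.
  intros HD HL.
  assert (HlnL : 1 <= ln L) by (rewrite <- (ln_exp 1); apply ln_le; [apply exp_pos|auto]).
  assert (HL0 : 0 < L) by (pose proof (exp_pos 1); lra).
  assert (HlnL2 : ln L * ln L <= 4 * L).
  { pose proof (ln_le_2_sqrt L HL0). pose proof (sqrt_sqrt L (Rlt_le _ _ HL0)).
    pose proof (sqrt_pos L). nra. }
  apply (Rmult_le_reg_r (ln L)); [lra|].
  replace (10 * D ^ 2 / ln L * L * ln L) with (10 * D ^ 2 * L) by (field; lra).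
  assert ((D - 2) * (ln L * ln L) <= (D - 2) * (4 * L)) by (apply Rmult_le_compat_l; lra).
  assert (4 * (D - 2) * L <= 10 * D ^ 2 * L) by (apply Rmult_le_compat_r; nra).
  nra.
Qed.

Lemma exp_delta_mul_large (d : nat) (qM L : R) : (5 <= d)%nat -> 0 < qM -> exp 1 <= L ->
  (2 * INR d - 5) * ln qM <= 2 * (INR d - 4) * L ->
  let P := exp ((1 + 10 * INR d ^ 2 / ln L) * L) in
  qM ^ (2 * d - 5) * (ln P) ^ (2 * (d - 2)) <= (1 + 10 * INR d ^ 2) ^ (2 * (d - 2)) * P ^ (2 * (d - 4)).
Proof.
  intros H5 HqM HL Hkey P.
  set (D := INR d) in *.
  assert (HD : 5 <= D) by (unfold D; replace 5 with (INR 5) by (simpl; lra); apply le_INR; lia).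
  assert (HlnL : 1 <= ln L) by (rewrite <- (ln_exp 1); apply ln_le; [apply exp_pos|lra]).
  set (delta := 10 * D ^ 2 / ln L).
  assert (Hdel0 : 0 <= delta) by (unfold delta; apply Rmult_le_pos; [nra|left; apply Rinv_0_lt_compat; lra]).
  assert (Hdel1 : delta <= 10 * D ^ 2).
  { unfold delta. apply (Rmult_le_reg_r (ln L)); [lra|].
    replace (10 * D ^ 2 / ln L * ln L) with (10 * D ^ 2) by (field; lra). nra. }
  assert (HlnP : ln P = (1 + delta) * L) by (unfold P; rewrite ln_exp; reflexivity).
  assert (HP0 : 0 < P) by (unfold P; apply exp_pos).
  assert (He : 0 < exp 1) by apply exp_pos.
  set (l := ln P) in *.
  assert (Hl0 : 0 < l) by (rewrite HlnP; nra).
  assert (Hdl : (D - 2) * ln L <= delta * L) by (apply ln_mul_le_delta; lra).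
  assert (Hlnl : ln l <= ln (1 + 10 * D ^ 2) + ln L).
  { rewrite <- ln_mult by nra. apply ln_le; [lra|]. rewrite HlnP. nra. }
  apply le_of_ln_le; [apply Rmult_lt_0_compat; apply pow_lt; nra|].
  rewrite !ln_mult, !ln_pow by (try apply pow_lt; nra).
  rewrite ?mult_INR, ?minus_INR, ?mult_INR by lia. fold D l. simpl (INR 2). simpl (INR 5). simpl (INR 4).
  assert (0 <= ln (1 + 10 * D ^ 2)) by (rewrite <- ln_1; apply ln_le; nra).
  assert ((D - 2) * ln l <= (D - 2) * (ln (1 + 10 * D ^ 2) + ln L)) by (apply Rmult_le_compat_l; lra).
  assert (0 <= (D - 5) * (delta * L)) by (apply Rmult_le_pos; [lra|apply Rmult_le_pos; lra]).
  assert ((D - 4) * l = (D - 4) * L + (D - 4) * (delta * L)) by (rewrite HlnP; ring).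
  lra.
Qed.

Lemma Ppar_large (d : nat) (Cd qM b : R) : (5 <= d)%nat -> 1 <= Cd -> exp (exp 1) <= qM ->
  INR d - 5/2 <= (INR d - 4) * (/2 + b) ->
  let H := Cd * Rpower qM (/2 + b) in
  let P := exp ((1 + 10 * INR d ^ 2 / ln (ln H)) * ln H) in
  qM ^ (2 * d - 5) * (ln P) ^ (2 * (d - 2)) <= (1 + 10 * INR d ^ 2) ^ (2 * (d - 2)) * P ^ (2 * (d - 4))
  /\ qM <= P /\ 1 <= ln P.
Proof.
  intros H5 HCd HqM Hb H P.
  assert (HD : 5 <= INR d) by (replace 5 with (INR 5) by (simpl; lra); apply le_INR; lia).
  assert (Hb' : 1 <= /2 + b) by nra.
  assert (He : 2 <= exp 1) by (pose proof (exp_ineq1_le 1); lra).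
  assert (HqM0 : 0 < qM) by (pose proof (exp_pos (exp 1)); lra).
  assert (HlnqM : exp 1 <= ln qM) by (rewrite <- (ln_exp (exp 1)); apply ln_le; [apply exp_pos|auto]).
  assert (HL : ln H = ln Cd + (/2 + b) * ln qM)
    by (unfold H; rewrite ln_mult, ln_Rpower; [ring|lra|unfold Rpower; apply exp_pos]).
  assert (HlnCd : 0 <= ln Cd) by (rewrite <- ln_1; apply ln_le; lra).
  assert (HLq : ln qM <= ln H) by (rewrite HL; nra).
  assert (Hdel : 1 <= 1 + 10 * INR d ^ 2 / ln (ln H)).
  { assert (1 <= ln (ln H)) by (rewrite <- (ln_exp 1); apply ln_le; [apply exp_pos|lra]).
    assert (0 <= 10 * INR d ^ 2 / ln (ln H)) by (apply Rmult_le_pos; [nra|left; apply Rinv_0_lt_compat; lra]).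
    lra. }
  assert (HlnP : ln H <= ln P) by (unfold P; rewrite ln_exp; nra).
  split; [|split; [apply le_of_ln_le; [unfold P; apply exp_pos|lra]|lra]].
  apply exp_delta_mul_large; [auto|lra|lra|].
  rewrite HL. assert (2 * INR d - 5 <= 2 * ((INR d - 4) * (/2 + b))) by lra. nra.
Qed.

(** * The integral of |S_1 ... S_d| *)

Lemma fold_right_Rmin_cases (x0 : R) (l : list R) :
  fold_right Rmin x0 l = x0 \/ In (fold_right Rmin x0 l) l.
Proof.
  induction l as [|x l IH]; [simpl; auto|]. cbn [fold_right].
  destruct (Rle_dec x (fold_right Rmin x0 l)) as [h|h].
  - rewrite Rmin_left by auto. right. left. auto.
  - rewrite Rmin_right by lra. destruct IH as [IH|IH]; [left|right; right]; auto.
Qed.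

Lemma fold_right_Rmin_le (x0 y : R) (l : list R) : In y l -> fold_right Rmin x0 l <= y.
Proof.
  induction l as [|x l IH]; simpl; [tauto|]. intros [->|H].
  - apply Rmin_l.
  - eapply Rle_trans; [apply Rmin_r|auto].
Qed.

Lemma fold_right_Rmax_ge (y : R) (l : list R) : In y l -> y <= fold_right Rmax 0 l.
Proof.
  induction l as [|x l IH]; simpl; [tauto|]. intros [->|H].
  - apply Rmax_l.
  - eapply Rle_trans; [auto|apply Rmax_r].
Qed.

Lemma in_absq (d : nat) (q : nat -> R) (j : nat) : (j < d)%nat -> In (Rabs (q j)) (absq d q).
Proof. intros H. apply (in_map (fun i => Rabs (q i))), in_seq. lia. Qed.

Lemma qmax_ge (d : nat) (q : nat -> R) (j : nat) : (j < d)%nat -> Rabs (q j) <= qmax d q.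
Proof. intros; apply fold_right_Rmax_ge, in_absq; auto. Qed.

Lemma qmin_le (d : nat) (q : nat -> R) (j : nat) : (j < d)%nat -> qmin d q <= Rabs (q j).
Proof. intros; apply fold_right_Rmin_le, in_absq; auto. Qed.

Lemma qmin_attained (d : nat) (q : nat -> R) : (1 <= d)%nat ->
  exists a, (a < d)%nat /\ Rabs (q a) = qmin d q.
Proof.
  intros Hd. unfold qmin. destruct (fold_right_Rmin_cases (Rabs (q 0%nat)) (absq d q)) as [H|H].
  - exists 0%nat. split; [lia|auto].
  - apply in_map_iff in H. destruct H as [j [Hj Hin]].
    apply in_seq in Hin. exists j. split; [lia|exact Hj].
Qed.

Lemma Qabs_prodn (d : nat) (q : nat -> R) : Qabs d q = prodn (fun j => Rabs (q j)) d.
Proof. apply fold_right_Rmult_map_seq. Qed.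

Lemma absprodS_prodn (d : nat) (Cd : R) (q : nat -> R) (x : R) :
  absprodS d Cd q x = prodn (fun j => Cmod (Sj d Cd q j x)) d.
Proof. apply fold_right_Rmult_map_seq. Qed.

Lemma sum_n_fst (f : nat -> C) (N : nat) : fst (sum_n f N) = sum_f_R0 (fun m => fst (f m)) N.
Proof.
  induction N as [|N IH]; [rewrite sum_O; reflexivity|].
  rewrite sum_Sn, tech5, <- IH. reflexivity.
Qed.

Lemma sum_n_snd (f : nat -> C) (N : nat) : snd (sum_n f N) = sum_f_R0 (fun m => snd (f m)) N.
Proof.
  induction N as [|N IH]; [rewrite sum_O; reflexivity|].
  rewrite sum_Sn, tech5, <- IH. reflexivity.
Qed.

Lemma Cmod_Sj (d : nat) (Cd : R) (q : nat -> R) (j : nat) (alpha : R) :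
  Cmod (Sj d Cd q j alpha) =
  sqrt (weyl_abs2 (Ppar d Cd q) (sqrt (Rabs (q j))) (2 * INR d) (q j)
          (Z.to_nat (up (2 * INR d * Ppar d Cd q))) alpha).
Proof.
  unfold Cmod, weyl_abs2, Sj. cbv zeta. rewrite sum_n_fst, sum_n_snd.
  f_equal. f_equal; f_equal; apply sum_eq; intros m _; unfold window, weyl_phase;
    repeat destruct Rlt_dec; simpl; ring.
Qed.

Lemma continuous_sum_f_R0 (f : nat -> R -> R) (N : nat) (x : R) :
  (forall i, continuous (f i) x) -> continuous (fun y => sum_f_R0 (fun i => f i y) N) x.
Proof.
  intros H. induction N as [|N IH]; simpl; [apply H|].
  apply (@continuous_plus R_UniformSpace R_AbsRing R_NormedModule
           (fun y => sum_f_R0 (fun i => f i y) N) (f (S N))); auto.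
Qed.

Lemma continuous_weyl_abs2 P s D c M x : continuous (weyl_abs2 P s D c M) x.
Proof.
  eapply continuous_ext; [intros y; symmetry; apply weyl_abs2_expand|].
  do 2 (apply continuous_sum_f_R0; intros).
  apply (@ex_derive_continuous R_AbsRing R_NormedModule). auto_derive. auto.
Qed.

Lemma continuous_absprodS (d : nat) (Cd : R) (q : nat -> R) (x : R) :
  continuous (absprodS d Cd q) x.
Proof.
  unfold absprodS. generalize (seq 0 d). intros l. induction l as [|j l IH]; simpl.
  - apply continuous_const.
  - apply (@continuous_mult R_UniformSpace R_AbsRing (fun a => Cmod (Sj d Cd q j a))); auto.
    eapply continuous_ext; [intros; symmetry; apply Cmod_Sj|].
    apply continuous_sqrt_comp, continuous_weyl_abs2.
Qed.

Lemma weighted_pair_le (r Dn lam Ia Ib : R) : 1 <= r -> 1 <= Dn * lam ->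
  Ia <= 1 / 4 + 2 * Dn * lam -> Ib <= r * r / 4 + 2 * Dn * lam ->
  (r * Ia + Ib / r) / 2 <= r * (3 * Dn * lam).
Proof.
  intros Hr Hlam HIa HIb.
  assert (Hinvr : / r <= r) by (apply Rle_trans with 1; [rewrite <- Rinv_1; apply Rinv_le_contravar|]; lra).
  assert (HIb_r : Ib / r <= r / 4 + 2 * Dn * lam * r).
  { apply Rle_trans with ((r * r / 4 + 2 * Dn * lam) * / r).
    - apply Rmult_le_compat_r; [left; apply Rinv_0_lt_compat|]; lra.
    - rewrite Rmult_plus_distr_r. replace (r * r / 4 * / r) with (r / 4) by (field; lra).
      apply Rplus_le_compat_l, Rmult_le_compat_l; [lra|exact Hinvr]. }
  assert (r * Ia <= r * (1 / 4 + 2 * Dn * lam)) by (apply Rmult_le_compat_l; lra).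
  assert (r * 1 <= r * (Dn * lam)) by (apply Rmult_le_compat_l; lra).
  lra.
Qed.

Section MinorArc.

Variables (d : nat) (Cd : R) (q : nat -> R).
Hypotheses (Hd : (2 <= d)%nat) (Hq1 : forall i, (i < d)%nat -> 1 <= Rabs (q i))
  (HqMP : qmax d q <= Ppar d Cd q).

Local Notation P := (Ppar d Cd q).
Local Notation qM := (qmax d q).
Local Notation q0 := (qmin d q).
Local Notation Dn := (INR d).
Local Notation M := (Z.to_nat (up (2 * INR d * Ppar d Cd q))).
Local Notation a0 := (/ (8 * INR d * Ppar d Cd q) * / sqrt (qmax d q)).
Local Notation a1 := (/ (8 * INR d * Ppar d Cd q) * / sqrt (qmin d q)).
Local Notation t j x := (sqrt (Rabs (q j)) * Cmod (Sj d Cd q j x)).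

Lemma qmin_ge_1 : 1 <= q0.
Proof. destruct (qmin_attained d q ltac:(lia)) as [a [Ha <-]]. auto. Qed.

Lemma qmin_le_qmax : q0 <= qM.
Proof. pose proof (qmin_le d q 0 ltac:(lia)). pose proof (qmax_ge d q 0 ltac:(lia)). lra. Qed.

Lemma INR_d_ge_2 : 2 <= Dn.
Proof. replace 2 with (INR 2) by (simpl; lra). apply le_INR; lia. Qed.

Lemma minor_arc_M_bounds : 2 * Dn * P < INR M <= 2 * Dn * P + 1.
Proof. apply INR_up_bounds. pose proof qmin_ge_1. pose proof qmin_le_qmax. pose proof INR_d_ge_2. nra. Qed.

Lemma minor_arc_endpoints : 0 < a0 <= a1.
Proof.
  pose proof qmin_ge_1. pose proof qmin_le_qmax. pose proof INR_d_ge_2.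
  assert (0 < / (8 * Dn * P)) by (apply Rinv_0_lt_compat; nra).
  assert (0 < sqrt q0) by (apply sqrt_lt_R0; lra).
  split; [apply Rmult_lt_0_compat; [|apply Rinv_0_lt_compat, sqrt_lt_R0]; lra|].
  apply Rmult_le_compat_l; [lra|]. apply Rinv_le_contravar; [lra|]. apply sqrt_le_1; lra.
Qed.

Lemma Sj_weighted_sq (j : nat) (x : R) :
  (t j x) ^ 2 = Rabs (q j) * weyl_abs2 P (sqrt (Rabs (q j))) (2 * Dn) (q j) M x.
Proof.
  rewrite Rpow_mult_distr, pow2_sqrt, Cmod_Sj, pow2_sqrt
    by (apply Rabs_pos || apply weyl_abs2_nonneg). reflexivity.
Qed.

Lemma Sj_weighted_minor_arc_le (j : nat) (x : R) : (j < d)%nat -> a0 <= x <= a1 ->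
  t j x <= sqrt (Dn * P * qM * (32 + 40 * (1 + ln (4 * Dn * P)))).
Proof.
  intros Hj Hx. pose proof (qmin_le d q j Hj). pose proof (qmax_ge d q j Hj).
  rewrite <- (sqrt_pow2 (t j x)) by (apply Rmult_le_pos; [apply sqrt_pos|apply Cmod_ge_0]).
  apply sqrt_le_1_alt. rewrite Sj_weighted_sq.
  pose proof minor_arc_M_bounds. pose proof INR_d_ge_2. pose proof (Hq1 j Hj). pose proof qmin_ge_1.
  apply weyl_abs2_minor_arc_le; try lra.
  eapply Rle_trans; [apply Hx|]. rewrite <- (Rmult_1_r (/ (8 * Dn * P))) at 2.
  apply Rmult_le_compat_l; [left; apply Rinv_0_lt_compat; nra|].
  rewrite <- Rinv_1. apply Rinv_le_contravar; [lra|]. rewrite <- sqrt_1. apply sqrt_le_1; lra.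
Qed.

Lemma RInt_Sj_weighted_sq_le (j : nat) : (j < d)%nat ->
  ex_RInt (fun x => t j x ^ 2) a0 a1 /\
  RInt (fun x => t j x ^ 2) a0 a1 <= sqrt (Rabs (q j)) / (4 * sqrt q0) + 2 * Dn * (1 + ln (INR M + 1)).
Proof.
  intros Hj. pose proof (qmin_le d q j Hj). pose proof (qmax_ge d q j Hj).
  pose proof qmin_ge_1. pose proof INR_d_ge_2. pose proof minor_arc_endpoints. pose proof (Hq1 j Hj).
  destruct (RInt_weyl_abs2_minor_arc_le Dn P (q j) (sqrt q0) a0 a1 M) as [Hex HI]; try lra.
  { apply sqrt_lt_R0. lra. }
  assert (Hsq : forall x, t j x ^ 2 = Rabs (q j) * weyl_abs2 P (sqrt (Rabs (q j))) (2 * Dn) (q j) M x)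
    by (intros; apply Sj_weighted_sq).
  assert (Hex' : ex_RInt (fun x => Rabs (q j) * weyl_abs2 P (sqrt (Rabs (q j))) (2 * Dn) (q j) M x) a0 a1)
    by exact (ex_RInt_scal _ a0 a1 (Rabs (q j)) Hex).
  split; [eapply ex_RInt_ext; [|exact Hex']; intros; symmetry; apply Hsq|].
  rewrite (RInt_ext _ _ _ _ (fun x _ => Hsq x)).
  rewrite (RInt_scal _ a0 a1 (Rabs (q j)) Hex
    : RInt (fun x => Rabs (q j) * weyl_abs2 P (sqrt (Rabs (q j))) (2 * Dn) (q j) M x) a0 a1 = _).
  exact HI.
Qed.

Lemma sqrt_Qabs_eq : sqrt (Qabs d q) = prodn (fun j => sqrt (Rabs (q j))) d.
Proof. rewrite Qabs_prodn. apply sqrt_prodn. intros; apply Rabs_pos. Qed.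

Lemma sqrt_Qabs_pos : 0 < sqrt (Qabs d q).
Proof.
  rewrite sqrt_Qabs_eq. apply prodn_pos. intros j Hj. apply sqrt_lt_R0.
  pose proof (Hq1 j Hj). lra.
Qed.

Lemma absprodS_eq_weighted (x : R) :
  absprodS d Cd q x = / sqrt (Qabs d q) * prodn (fun j => t j x) d.
Proof.
  pose proof sqrt_Qabs_pos. rewrite prodn_mul, <- sqrt_Qabs_eq, absprodS_prodn. field. lra.
Qed.

Lemma RInt_Sj_weighted_sq_le_q0 (j : nat) : (j < d)%nat -> Rabs (q j) = q0 ->
  RInt (fun x => t j x ^ 2) a0 a1 <= 1 / 4 + 2 * Dn * (1 + ln (INR M + 1)).
Proof.
  intros Hj Hqj. eapply Rle_trans; [apply (RInt_Sj_weighted_sq_le j Hj)|].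
  rewrite Hqj. right. field. apply Rgt_not_eq, sqrt_lt_R0. pose proof qmin_ge_1. lra.
Qed.

Lemma RInt_Sj_weighted_sq_le_qM (j : nat) : (j < d)%nat ->
  RInt (fun x => t j x ^ 2) a0 a1 <= sqrt qM / 4 + 2 * Dn * (1 + ln (INR M + 1)).
Proof.
  intros Hj. eapply Rle_trans; [apply (RInt_Sj_weighted_sq_le j Hj)|].
  apply Rplus_le_compat_r. pose proof qmin_ge_1.
  assert (1 <= sqrt q0) by (rewrite <- sqrt_1; apply sqrt_le_1; lra).
  unfold Rdiv. apply Rmult_le_compat.
  - apply sqrt_pos.
  - left. apply Rinv_0_lt_compat. lra.
  - apply sqrt_le_1_alt, qmax_ge, Hj.
  - apply Rinv_le_contravar; lra.
Qed.

Lemma RInt_absprodS_le :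
  RInt (absprodS d Cd q) a0 a1 <=
  sqrt (Dn * P * qM * (32 + 40 * (1 + ln (4 * Dn * P)))) ^ (d - 2) * sqrt (sqrt qM)
    * (3 * Dn * (1 + ln (INR M + 1))) / sqrt (Qabs d q).
Proof.
  pose proof qmin_ge_1. pose proof qmin_le_qmax. pose proof INR_d_ge_2. pose proof minor_arc_endpoints.
  pose proof sqrt_Qabs_pos.
  destruct (qmin_attained d q ltac:(lia)) as [a [Ha Hqa]].
  set (b := if (a =? 0)%nat then 1%nat else 0%nat).
  assert (Hb : (b < d)%nat /\ b <> a)
    by (unfold b; destruct (a =? 0)%nat eqn:E; [apply Nat.eqb_eq in E|apply Nat.eqb_neq in E]; lia).
  set (V := sqrt (Dn * P * qM * (32 + 40 * (1 + ln (4 * Dn * P))))).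
  assert (HV : 0 < V).
  { apply sqrt_lt_R0. assert (0 <= ln (4 * Dn * P)) by (rewrite <- ln_1; apply ln_le; nra).
    apply Rmult_lt_0_compat; [apply Rmult_lt_0_compat; [apply Rmult_lt_0_compat|]|]; lra. }
  set (r := sqrt (sqrt qM)).
  assert (HsqM : 1 <= sqrt qM) by (rewrite <- sqrt_1; apply sqrt_le_1; lra).
  assert (Hr1 : 1 <= r) by (unfold r; rewrite <- sqrt_1; apply sqrt_le_1; lra).
  assert (Hexp : ex_RInt (fun x => prodn (fun j => t j x) d) a0 a1).
  { assert (Heq : forall x, sqrt (Qabs d q) * absprodS d Cd q x = prodn (fun j => t j x) d)
      by (intros; rewrite absprodS_eq_weighted; field; lra).
    apply (ex_RInt_ext (fun x => sqrt (Qabs d q) * absprodS d Cd q x)); [intros; apply Heq|].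
    apply (ex_RInt_scal (absprodS d Cd q)), (@ex_RInt_continuous R_CompleteNormedModule).
    intros; apply continuous_absprodS. }
  rewrite (RInt_ext _ _ _ _ (fun x _ => absprodS_eq_weighted x)).
  rewrite (RInt_scal _ a0 a1 (/ sqrt (Qabs d q)) Hexp
    : RInt (fun x => / sqrt (Qabs d q) * prodn (fun j => t j x) d) a0 a1 = _).
  rewrite Rmult_comm. apply Rmult_le_compat_r; [left; apply Rinv_0_lt_compat; lra|].
  eapply Rle_trans.
  { refine (RInt_prodn_le (fun j x => t j x) d a b a0 a1 V r _ Ha (proj1 Hb)
      (not_eq_sym (proj2 Hb)) HV _ _ _ Hexp (proj1 (RInt_Sj_weighted_sq_le a Ha))
      (proj1 (RInt_Sj_weighted_sq_le b (proj1 Hb)))); try lra.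
    - intros. apply Rmult_le_pos; [apply sqrt_pos|apply Cmod_ge_0].
    - intros. apply Sj_weighted_minor_arc_le; auto. }
  pose proof (RInt_Sj_weighted_sq_le_q0 a Ha Hqa). pose proof (RInt_Sj_weighted_sq_le_qM b (proj1 Hb)).
  set (lam := 1 + ln (INR M + 1)) in *.
  assert (Hlam : 1 <= lam).
  { unfold lam. pose proof (pos_INR M). pose proof (ln_le 1 (INR M + 1)). rewrite ln_1 in *. lra. }
  apply Rle_trans with (V ^ (d - 2) * ((r * RInt (fun x => t a x ^ 2) a0 a1
                                        + RInt (fun x => t b x ^ 2) a0 a1 / r) / 2)); [right; field; lra|].
  apply Rle_trans with (V ^ (d - 2) * (r * (3 * Dn * lam))); [|right; ring].
  apply Rmult_le_compat_l; [apply pow_le; lra|].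
  assert (1 * 1 <= Dn * lam) by (apply Rmult_le_compat; lra).
  apply weighted_pair_le; [lra|lra|lra|].
  unfold r. rewrite sqrt_sqrt by apply sqrt_pos. lra.
Qed.

End MinorArc.

Lemma le_of_pow2_le (x y : R) : 0 <= x -> 0 <= y -> x ^ 2 <= y ^ 2 -> x <= y.
Proof. intros Hx Hy H. apply Rsqr_incr_0; auto. rewrite !Rsqr_pow2. exact H. Qed.

Lemma pow_sqrt_le_of_sq_le (k : nat) (P qM l G : R) : 0 < P -> 1 <= qM -> 1 <= l -> 1 <= G ->
  qM ^ (2 * k + 5) * l ^ (2 * k + 6) <= G ^ 2 * P ^ (2 * k + 2) ->
  qM ^ (k + 2) * sqrt qM * l ^ (k + 3) <= G ^ 2 * P ^ (k + 1).
Proof.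
  intros HP HqM Hl HG Hboost.
  set (X := qM ^ (k + 2) * sqrt qM * l ^ (k + 3)).
  assert (HX0 : 0 <= X) by (unfold X; repeat apply Rmult_le_pos; try apply pow_le; try apply sqrt_pos; lra).
  assert (X <= G * P ^ (k + 1)).
  { apply le_of_pow2_le; [auto|apply Rmult_le_pos; [lra|apply pow_le; lra]|].
    replace (X ^ 2) with (qM ^ (2 * k + 5) * l ^ (2 * k + 6)).
    - rewrite Rpow_mult_distr, <- pow_mult. replace ((k + 1) * 2)%nat with (2 * k + 2)%nat by lia.
      exact Hboost.
    - unfold X. rewrite !Rpow_mult_distr, pow2_sqrt, <- !pow_mult by lra.
      replace (2 * k + 5)%nat with (S ((k + 2) * 2)) by lia.
      replace ((k + 3) * 2)%nat with (2 * k + 6)%nat by lia. simpl. ring. }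
  assert (0 <= P ^ (k + 1)) by (apply pow_le; lra).
  assert (G * P ^ (k + 1) <= G ^ 2 * P ^ (k + 1)) by (apply Rmult_le_compat_r; nra).
  lra.
Qed.

Lemma minor_arc_power_arith (k : nat) (Dn P qM l V2 lam E0 c1 G : R) :
  0 < P -> 1 <= qM -> 1 <= l -> 0 <= V2 <= E0 * P * qM * l -> 0 <= lam <= c1 * l ->
  0 < E0 -> 0 < c1 -> 1 <= G -> 0 < Dn ->
  qM ^ (2 * k + 5) * l ^ (2 * k + 6) <= G ^ 2 * P ^ (2 * k + 2) ->
  sqrt V2 ^ (k + 3) * sqrt (sqrt qM) * (3 * Dn * lam) <=
  sqrt (E0 ^ (k + 3) * (9 * Dn ^ 2 * c1 ^ 2)) * G * sqrt qM * P ^ (k + 2) * l.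
Proof.
  intros HP HqM Hl HV Hlam HE0 Hc1 HG HDn Hboost.
  set (A := E0 ^ (k + 3) * (9 * Dn ^ 2 * c1 ^ 2)).
  assert (HA : 0 <= A) by (unfold A; apply Rmult_le_pos; [apply pow_le; lra|nra]).
  assert (Hsq2 : sqrt qM ^ 2 = qM) by (apply pow2_sqrt; lra).
  set (X := qM ^ (k + 2) * sqrt qM * l ^ (k + 3)).
  assert (HX : X <= G ^ 2 * P ^ (k + 1)) by (apply pow_sqrt_le_of_sq_le; auto).
  apply le_of_pow2_le.
  - repeat apply Rmult_le_pos; try apply pow_le; try apply sqrt_pos; lra.
  - repeat apply Rmult_le_pos; try apply pow_le; try apply sqrt_pos; lra.
  - replace ((sqrt V2 ^ (k + 3) * sqrt (sqrt qM) * (3 * Dn * lam)) ^ 2)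
      with (V2 ^ (k + 3) * sqrt qM * (9 * Dn ^ 2 * lam ^ 2)).
    2:{ rewrite !Rpow_mult_distr, <- pow_mult, Nat.mul_comm, pow_mult, pow2_sqrt, pow2_sqrt
          by (try apply sqrt_pos; lra). ring. }
    replace ((sqrt A * G * sqrt qM * P ^ (k + 2) * l) ^ 2)
      with (A * (G ^ 2 * P ^ (k + 1) * qM * P ^ (k + 3)) * l ^ 2).
    2:{ rewrite !Rpow_mult_distr, pow2_sqrt, Hsq2 by auto.
        replace (k + 3)%nat with (S (S (k + 1))) by lia. replace (k + 2)%nat with (S (k + 1)) by lia.
        simpl. ring. }
    apply Rle_trans with ((E0 * P * qM * l) ^ (k + 3) * sqrt qM * (9 * Dn ^ 2 * (c1 * l) ^ 2)).
    + apply Rmult_le_compat; [apply Rmult_le_pos; [apply pow_le|apply sqrt_pos]; lra|nra| |].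
      * apply Rmult_le_compat_r; [apply sqrt_pos|apply pow_incr; lra].
      * apply Rmult_le_compat_l; [nra|apply pow_incr; lra].
    + replace ((E0 * P * qM * l) ^ (k + 3) * sqrt qM * (9 * Dn ^ 2 * (c1 * l) ^ 2))
        with (A * (X * qM * P ^ (k + 3)) * l ^ 2).
      2:{ unfold A, X. rewrite !Rpow_mult_distr. replace (k + 3)%nat with (S (k + 2)) by lia.
          simpl. ring. }
      apply Rmult_le_compat_r; [apply pow2_ge_0|]. apply Rmult_le_compat_l; auto.
      assert (0 <= qM * P ^ (k + 3)) by (apply Rmult_le_pos; [lra|apply pow_le; lra]).
      replace (X * qM * P ^ (k + 3)) with (X * (qM * P ^ (k + 3))) by ring.
      replace (G ^ 2 * P ^ (k + 1) * qM * P ^ (k + 3)) with (G ^ 2 * P ^ (k + 1) * (qM * P ^ (k + 3)))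
        by ring.
      apply Rmult_le_compat_r; auto.
Qed.

Lemma log_factor_le (Dn P : R) : 1 <= Dn -> 0 < P -> 1 <= ln P ->
  1 + ln (4 * Dn * P) <= (2 + ln (4 * Dn)) * ln P.
Proof.
  intros HDn HP Hl. rewrite ln_mult by lra.
  assert (0 <= ln (4 * Dn)) by (rewrite <- ln_1; apply ln_le; lra).
  assert (0 <= ln (4 * Dn) * (ln P - 1)) by (apply Rmult_le_pos; lra). nra.
Qed.

Definition minor_arc_const (d : nat) : R :=
  let Dn := INR d in
  let c1 := 2 + ln (4 * Dn) in
  sqrt ((72 * Dn * c1) ^ (d - 2) * (9 * Dn ^ 2 * c1 ^ 2)) * (1 + 10 * Dn ^ 2) ^ (d - 2).

Lemma minor_arc_const_le (d M : nat) (P qM : R) :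
  (5 <= d)%nat -> 1 <= qM -> qM <= P -> 1 <= ln P -> INR M <= 2 * INR d * P + 1 ->
  qM ^ (2 * d - 5) * ln P ^ (2 * (d - 2)) <= (1 + 10 * INR d ^ 2) ^ (2 * (d - 2)) * P ^ (2 * (d - 4)) ->
  sqrt (INR d * P * qM * (32 + 40 * (1 + ln (4 * INR d * P)))) ^ (d - 2) * sqrt (sqrt qM)
    * (3 * INR d * (1 + ln (INR M + 1)))
  <= minor_arc_const d * sqrt qM * P ^ (d - 3) * ln P.
Proof.
  intros Hd HqM HqMP Hl HM Hboost. unfold minor_arc_const.
  set (Dn := INR d) in *. set (c1 := 2 + ln (4 * Dn)). set (E0 := 72 * Dn * c1).
  set (G := (1 + 10 * Dn ^ 2) ^ (d - 2)).
  assert (HDn : 5 <= Dn) by (unfold Dn; replace 5 with (INR 5) by (simpl; lra); apply le_INR; lia).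
  assert (Hc1 : 2 <= c1).
  { assert (0 <= ln (4 * Dn)) by (rewrite <- ln_1; apply ln_le; lra). unfold c1; lra. }
  assert (HE0 : 0 < E0) by (unfold E0; nra).
  assert (HG : 1 <= G) by (apply pow_R1_Rle; nra).
  assert (Hlam1 : 1 + ln (4 * Dn * P) <= c1 * ln P) by (apply log_factor_le; lra).
  assert (Hlam2 : 0 <= 1 + ln (INR M + 1) <= c1 * ln P).
  { pose proof (pos_INR M). split; [rewrite <- ln_1; pose proof (ln_le 1 (INR M + 1)); lra|].
    assert (ln (INR M + 1) <= ln (4 * Dn * P)) by (apply ln_le; nra). lra. }
  assert (HV2 : 0 <= Dn * P * qM * (32 + 40 * (1 + ln (4 * Dn * P))) <= E0 * P * qM * ln P).
  { assert (0 <= Dn * P * qM) by (apply Rmult_le_pos; nra).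
    assert (c1 * 1 <= c1 * ln P) by (apply Rmult_le_compat_l; lra).
    assert (0 <= ln (4 * Dn * P)) by (rewrite <- ln_1; apply ln_le; nra).
    split; [apply Rmult_le_pos; lra|]. unfold E0.
    replace (72 * Dn * c1 * P * qM * ln P) with (Dn * P * qM * (72 * c1 * ln P)) by ring.
    apply Rmult_le_compat_l; lra. }
  destruct (Nat.le_exists_sub 5 d Hd) as [k [Ek _]].
  replace (d - 2)%nat with (k + 3)%nat in * by lia. replace (d - 3)%nat with (k + 2)%nat by lia.
  apply minor_arc_power_arith; try lra.
  unfold G. rewrite <- pow_mult.
  replace (2 * k + 5)%nat with (2 * d - 5)%nat by lia.
  replace (2 * k + 6)%nat with (2 * (k + 3))%nat by lia.
  replace ((d - 2) * 2)%nat with (2 * (k + 3))%nat by lia.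
  replace (2 * k + 2)%nat with (2 * (d - 4))%nat by lia. exact Hboost.
Qed.

Theorem lemma2p6 :
  forall (d : nat), (5 <= d)%nat ->
  forall (Cd : R), 1 <= Cd ->
  exists Cst : R,
  forall q : nat -> R,
    (forall i : nat, (i < d)%nat -> exp (exp 1) <= Rabs (q i)) ->
    (1 <= npos d q)%nat -> (1 <= nneg d q)%nat ->
    (npos d q + nneg d q)%nat = d ->
    let P := Ppar d Cd q in
    RInt (absprodS d Cd q)
         (/ (8 * INR d * P) * / sqrt (qmax d q))
         (/ (8 * INR d * P) * / sqrt (qmin d q))
    <= Cst * sqrt (qmax d q) * / sqrt (Qabs d q) * P ^ (d - 3) * ln P.
Proof.
  intros d Hd Cd HCd. exists (minor_arc_const d).
  intros q Hq Hr Hs Hrs P.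
  assert (Hq1 : forall i, (i < d)%nat -> 1 <= Rabs (q i)).
  { intros i Hi. pose proof (Hq i Hi). pose proof (exp_ineq1_le (exp 1)). pose proof (exp_pos 1). lra. }
  assert (HqM : exp (exp 1) <= qmax d q)
    by (pose proof (qmax_ge d q 0 ltac:(lia)); pose proof (Hq 0%nat ltac:(lia)); lra).
  assert (Hsize : qmax d q ^ (2 * d - 5) * ln P ^ (2 * (d - 2))
                    <= (1 + 10 * INR d ^ 2) ^ (2 * (d - 2)) * P ^ (2 * (d - 4))
                  /\ qmax d q <= P /\ 1 <= ln P)
    by exact (Ppar_large d Cd (qmax d q) _ Hd HCd HqM (beta_bound _ _ d Hr Hs Hrs Hd)).
  destruct Hsize as [Hboost [HqMP Hl]].
  eapply Rle_trans; [apply (RInt_absprodS_le d Cd q); auto; lia|].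
  pose proof (sqrt_Qabs_pos d q Hq1) as HQ.
  apply (Rmult_le_reg_r (sqrt (Qabs d q))); [exact HQ|].
  unfold Rdiv. rewrite Rmult_assoc, Rinv_l, Rmult_1_r by lra.
  replace (minor_arc_const d * sqrt (qmax d q) * / sqrt (Qabs d q) * P ^ (d - 3) * ln P * sqrt (Qabs d q))
    with (minor_arc_const d * sqrt (qmax d q) * P ^ (d - 3) * ln P) by (field; lra).
  assert (HqM1 : 1 <= qmax d q) by (pose proof (exp_ineq1_le (exp 1)); pose proof (exp_pos 1); lra).
  assert (HM : 0 <= 2 * INR d * P) by (pose proof (pos_INR d); apply Rmult_le_pos; lra).
  apply minor_arc_const_le; auto. apply (INR_up_bounds _ HM).
Qed.
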